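(* Let $-1<p\le\frac23$ and $\gamma,a,w>0$, with moreover $\gamma^{-1/3}>a$ if $p=\frac23$. Consider the system \[ \begin{cases} i u_t + u_{xx} = a|u|^p u + u v,\\ v_t + f(v)_x = (|u|^2)_x, \end{cases}\qquad f(v)=-\gamma v^3 . \] Then it admits non-trivial solutions of the form $(u(x,t),v(x,t))=(e^{iwt}\phi(x),\psi(x))$, where $\phi\in C^2(\mathbb{R})\cap W^{2,\infty}(\mathbb{R})$ and $-\psi=\big(\frac{\phi^2}{\gamma}\big)^{1/3}\in C^1(\mathbb{R})\cap W^{1,\infty}(\mathbb{R})$ are non-negative, radially decreasing functions. Moreover: (i) if $p>-\frac23$, then $\phi\in C^3(\mathbb{R})\cap W^{3,\infty}(\mathbb{R})$ and $\psi\in C^2(\mathbb{R})\cap W^{2,\infty}(\mathbb{R})$; (ii) if $-1<p<0$, then $\phi$ and $\psi$ are compactly supported.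
   Context: Radially decreasing means even and nonincreasing on $[0,\infty)$. *)

From Stdlib Require Import Reals.
From Coquelicot Require Import Coquelicot.
Open Scope R_scope.

(* Real power x^y for x >= 0, with the convention 0^y = 0 (used only where
   this is the continuous extension, or multiplied by something vanishing). *)
Definition rpow (x y : R) : R := if Req_EM_T x 0 then 0 else Rpower x y.

Definition radially_decreasing (f : R -> R) : Prop :=
  (forall x, f (- x) = f x) /\ (forall x y, 0 <= x -> x <= y -> f y <= f x).

Definition Ck (k : nat) (f : R -> R) : Prop :=
  (forall j x, (j < k)%nat -> ex_derive (Derive_n f j) x) /\
  (forall j x, (j <= k)%nat -> continuous (Derive_n f j) x).

(* f in C^k(R) ∩ W^{k,oo}(R): C^k with all derivatives of order <= k bounded
   (for C^k functions the weak derivatives are the classical ones). *)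
Definition CkWkinf (k : nat) (f : R -> R) : Prop :=
  Ck k f /\ (forall j, (j <= k)%nat -> exists M, forall x, Rabs (Derive_n f j x) <= M).

Definition compactly_supported (f : R -> R) : Prop :=
  exists M, forall x, M < Rabs x -> f x = 0.

Definition flux (gamma v : R) : R := - gamma * v ^ 3.

Definition nonlin (p : R) (z : C) : C := Cmult (RtoC (rpow (Cmod z) p)) z.

Definition is_solution (p a gamma : R) (u : R -> R -> C) (v : R -> R -> R) : Prop :=
  (forall x t, exists (ut uxx : C) (ux : R -> C),
      is_derive (fun s => u x s) t ut /\
      (forall y, is_derive (fun y' => u y' t) y (ux y)) /\
      is_derive ux x uxx /\
      Cplus (Cmult Ci ut) uxx =
        Cplus (Cmult (RtoC a) (nonlin p (u x t))) (Cmult (u x t) (RtoC (v x t)))) /\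
  (forall x t, exists vt fx gx : R,
      is_derive (fun s => v x s) t vt /\
      is_derive (fun y => flux gamma (v y t)) x fx /\
      is_derive (fun y => Cmod (u y t) ^ 2) x gx /\
      vt + fx = gx).

(* With [u = e^(iwt) phi(x)] and [v = psi(x) = - b phi^(2/3)], [b = gamma^(-1/3)], the flux
   satisfies [f(psi) = phi^2], so the conservation law holds identically, and the Schroedinger
   equation becomes [phi'' = force phi = w phi + a phi^(p+1) - b phi^(5/3)], with energy
   integral [phi'^2 / 2 = pot phi].  The even, decreasing solution starts at the first
   positive zero [peak] of [pot] and is the inverse of the descent time
   [T y = int_y^peak ds / sqrt (2 pot s)].  This integral converges at [peak] because
   [force peak < 0] makes [pot] vanish linearly there.  Near [0], [pot s >= c s^(p+2)] when
   [p < 0], so [0] is reached in finite time and the support is compact; when [p >= 0],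
   [pot s <= C s^2] and the descent takes infinite time.  All derivatives of [phi] and [psi]
   are [sgn x] times explicit functions of [phi x]; these are continuous (up to order three
   for [phi], two for [psi]) as soon as [p > -2/3]. *)

From Stdlib Require Import Reals Lra Lia Psatz ClassicalEpsilon FunctionalExtensionality.
From Coquelicot Require Import Coquelicot.
Open Scope R_scope.

Definition apow (s e : R) : R := rpow (Rabs s) e.

Lemma apow_0l e : apow 0 e = 0.
Proof. unfold apow, rpow. rewrite Rabs_R0. destruct (Req_EM_T 0 0); [reflexivity|lra]. Qed.

Lemma apow_nz s e : s <> 0 -> apow s e = Rpower (Rabs s) e.
Proof.
  intros Hs. unfold apow, rpow. destruct (Req_EM_T (Rabs s) 0) as [E|E]; [|reflexivity].
  apply Rabs_eq_0 in E; lra.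
Qed.

Lemma apow_pos s e : 0 < s -> apow s e = Rpower s e.
Proof. intros Hs. rewrite apow_nz, Rabs_pos_eq by lra. reflexivity. Qed.

Lemma rpow_apow z e : 0 <= z -> rpow z e = apow z e.
Proof. intros Hz. unfold apow. rewrite Rabs_pos_eq; auto. Qed.

Lemma apow_gt0 s e : s <> 0 -> 0 < apow s e.
Proof. intros Hs. rewrite apow_nz by auto. apply exp_pos. Qed.

Lemma apow_ge0 s e : 0 <= apow s e.
Proof.
  destruct (Req_dec s 0) as [->|Hs]; [rewrite apow_0l; lra|].
  apply Rlt_le, apow_gt0; auto.
Qed.

Lemma apow_add s e1 e2 : apow s e1 * apow s e2 = apow s (e1 + e2).
Proof.
  destruct (Req_dec s 0) as [->|Hs]; [rewrite !apow_0l; ring|].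
  rewrite !apow_nz, Rpower_plus by auto. ring.
Qed.

Lemma apow_1 s : apow s 1 = Rabs s.
Proof.
  destruct (Req_dec s 0) as [->|Hs]; [rewrite apow_0l, Rabs_R0; auto|].
  rewrite apow_nz by auto. apply Rpower_1, Rabs_pos_lt; auto.
Qed.

Lemma apow_2 s : apow s 2 = s ^ 2.
Proof.
  replace 2 with (1 + 1) by ring. rewrite <- apow_add, apow_1.
  rewrite <- (Rsqr_abs s) at 1. unfold Rsqr. simpl. ring.
Qed.

Lemma apow_opp s e : s <> 0 -> apow s (- e) = / apow s e.
Proof. intros Hs. rewrite !apow_nz by auto. unfold Rpower. rewrite <- exp_Ropp. f_equal. ring. Qed.

Lemma apow_apow s e1 e2 : apow (apow s e1) e2 = apow s (e1 * e2).
Proof.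
  destruct (Req_dec s 0) as [->|Hs]; [rewrite !apow_0l; auto|].
  rewrite (apow_pos (apow s e1)) by (apply apow_gt0; auto).
  rewrite !apow_nz by auto. apply Rpower_mult.
Qed.

Lemma apow_mult s t e : apow (s * t) e = apow s e * apow t e.
Proof.
  destruct (Req_dec s 0) as [->|Hs]; [rewrite Rmult_0_l, !apow_0l; ring|].
  destruct (Req_dec t 0) as [->|Ht]; [rewrite Rmult_0_r, !apow_0l; ring|].
  rewrite !apow_nz by (auto; apply Rmult_integral_contrapositive; auto).
  rewrite Rabs_mult. symmetry. apply Rpower_mult_distr; apply Rabs_pos_lt; auto.
Qed.

Lemma apow_sqrt s e : apow s e = sqrt (apow s (2 * e)).
Proof.
  replace (2 * e) with (e + e) by ring.
  rewrite <- apow_add, sqrt_square; auto. apply apow_ge0.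
Qed.

Lemma apow_le s t e : 0 <= e -> 0 <= s <= t -> apow s e <= apow t e.
Proof.
  intros He Hst. destruct (Req_dec s 0) as [->|Hs]; [rewrite apow_0l; apply apow_ge0|].
  rewrite !apow_pos by lra. apply Rle_Rpower_l; lra.
Qed.

Lemma apow_exp t e : apow (exp t) e = exp (e * t).
Proof. rewrite apow_pos by apply exp_pos. unfold Rpower. rewrite ln_exp. auto. Qed.

Lemma locally_of_ball (x d : R) (Q : R -> Prop) :
  0 < d -> (forall y, Rabs (y - x) < d -> Q y) -> locally x Q.
Proof. intros Hd H. exists (mkposreal d Hd). intros y Hy. apply H. exact Hy. Qed.

Lemma continuous_eps_delta (f : R -> R) x :
  continuous f x <->
  forall eps, 0 < eps -> exists d, 0 < d /\ forall y, Rabs (y - x) < d -> Rabs (f y - f x) < eps.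
Proof.
  split.
  - intros Hc eps He. apply continuity_pt_filterlim in Hc.
    destruct (Hc eps He) as [d [Hd H]]. exists d; split; auto. intros y Hy.
    destruct (Req_dec y x) as [->|Hn]; [rewrite Rminus_diag, Rabs_R0; auto|].
    apply H. split; [split; [exact I|auto]|exact Hy].
  - intros H. apply continuity_pt_filterlim. intros eps He.
    destruct (H eps He) as [d [Hd Hy]]. exists d. split; auto.
    intros y [_ Hyd]. apply Hy. exact Hyd.
Qed.

Lemma is_derive_val (f : R -> R) (x l1 l2 : R) : l2 = l1 -> is_derive f x l2 -> is_derive f x l1.
Proof. intros ->; auto. Qed.

Lemma is_derive_constR (k x : R) : is_derive (fun _ : R => k) x 0.
Proof. auto_derive; auto. Qed.

Lemma is_derive_plusR (f g : R -> R) (x df dg : R) :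
  is_derive f x df -> is_derive g x dg -> is_derive (fun x => f x + g x) x (df + dg).
Proof. intros; apply (@is_derive_plus R_AbsRing R_NormedModule); auto. Qed.

Lemma is_derive_minusR (f g : R -> R) (x df dg : R) :
  is_derive f x df -> is_derive g x dg -> is_derive (fun x => f x - g x) x (df - dg).
Proof. intros; apply (@is_derive_minus R_AbsRing R_NormedModule); auto. Qed.

Lemma is_derive_multR (f g : R -> R) (x df dg : R) :
  is_derive f x df -> is_derive g x dg -> is_derive (fun x => f x * g x) x (df * g x + f x * dg).
Proof. intros; apply (@is_derive_mult R_AbsRing); auto. intros; apply Rmult_comm. Qed.

Lemma is_derive_scalR (k : R) (f : R -> R) (x df : R) :
  is_derive f x df -> is_derive (fun x => k * f x) x (k * df).
Proof. intros; apply is_derive_scal; auto. Qed.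

Lemma is_derive_compR (f g : R -> R) (x df dg : R) :
  is_derive f (g x) df -> is_derive g x dg -> is_derive (fun x => f (g x)) x (dg * df).
Proof. intros; apply (@is_derive_comp R_AbsRing R_NormedModule); auto. Qed.

Lemma is_derive_sqrtR (f : R -> R) (x df : R) :
  is_derive f x df -> 0 < f x -> is_derive (fun x => sqrt (f x)) x (df / (2 * sqrt (f x))).
Proof.
  intros Hf Hpos. apply (is_derive_compR sqrt f x); auto.
  apply is_derive_Reals, derivable_pt_lim_sqrt; auto.
Qed.

Lemma is_derive_locally_const (f : R -> R) (x k : R) :
  (exists r, 0 < r /\ forall y, Rabs (y - x) < r -> f y = k) -> is_derive f x 0.
Proof.
  intros [r [Hr H]]. apply is_derive_ext_loc with (f := fun _ => k).
  - apply (locally_of_ball x r); auto. intros y Hy. symmetry; auto.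
  - apply is_derive_constR.
Qed.

Lemma is_derive_pair (F : R -> C) (f g : R -> R) (x df dg : R) :
  (forall t, F t = (f t, g t)) -> is_derive f x df -> is_derive g x dg -> is_derive F x ((df, dg) : C).
Proof.
  intros E Hf Hg. apply is_derive_ext with (f := fun t => ((f t, g t) : C)); [intros; rewrite E; auto|].
  unfold is_derive in *.
  apply (filterdiff_comp'_2 f g (fun u v => (u, v)) x (fun y => scal y df) (fun y => scal y dg)
           (fun u v => (u, v)) Hf Hg).
  apply filterdiff_ext_lin with (fun t => t); [|intros [u v]; reflexivity].
  apply filterdiff_ext with (fun t => t); [intros [u v]; reflexivity|apply filterdiff_id].
Qed.

Lemma continuous_constR (k x : R) : continuous (fun _ => k) x.
Proof. apply continuity_pt_filterlim, continuity_pt_const. intros u v; auto. Qed.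

Lemma continuous_idR (x : R) : continuous (fun x : R => x) x.
Proof. apply continuity_pt_filterlim, continuity_pt_id. Qed.

Lemma continuous_plusR (f g : R -> R) (x : R) :
  continuous f x -> continuous g x -> continuous (fun x => f x + g x) x.
Proof.
  intros H1 H2. apply continuity_pt_filterlim. apply continuity_pt_filterlim in H1, H2.
  apply continuity_pt_plus; auto.
Qed.

Lemma continuous_minusR (f g : R -> R) (x : R) :
  continuous f x -> continuous g x -> continuous (fun x => f x - g x) x.
Proof.
  intros H1 H2. apply continuity_pt_filterlim. apply continuity_pt_filterlim in H1, H2.
  apply continuity_pt_minus; auto.
Qed.

Lemma continuous_multR (f g : R -> R) (x : R) :
  continuous f x -> continuous g x -> continuous (fun x => f x * g x) x.
Proof.
  intros H1 H2. apply continuity_pt_filterlim. apply continuity_pt_filterlim in H1, H2.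
  apply continuity_pt_mult; auto.
Qed.

Lemma continuous_scalR (k : R) (f : R -> R) (x : R) :
  continuous f x -> continuous (fun x => k * f x) x.
Proof. intros; apply continuous_multR; auto; apply continuous_constR. Qed.

Lemma continuous_compR (f g : R -> R) (x : R) :
  continuous g x -> continuous f (g x) -> continuous (fun x => f (g x)) x.
Proof. intros H1 H2. apply (continuous_comp g f); auto. Qed.

Lemma continuous_invR (f : R -> R) (x : R) :
  continuous f x -> f x <> 0 -> continuous (fun x => / f x) x.
Proof.
  intros H1 H2. apply continuity_pt_filterlim. apply continuity_pt_filterlim in H1.
  apply (continuity_pt_inv f x H1 H2).
Qed.

Lemma continuous_sqrtR (f : R -> R) (x : R) : continuous f x -> continuous (fun x => sqrt (f x)) x.
Proof.
  intros H. apply (continuous_compR sqrt f); auto. apply continuity_pt_filterlim.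
  destruct (Rle_or_lt 0 (f x)); [apply continuity_pt_sqrt; auto|].
  apply continuity_pt_locally_ext with (a := - f x) (f := fun _ => 0); [lra| |].
  - intros y Hy. unfold Rdist in Hy. apply Rabs_lt_between in Hy. rewrite sqrt_neg_0; auto; lra.
  - apply continuity_pt_const; intros u v; auto.
Qed.

Lemma continuous_absR (f : R -> R) (x : R) : continuous f x -> continuous (fun x => Rabs (f x)) x.
Proof.
  intros H. apply (continuous_compR Rabs f); auto.
  apply continuity_pt_filterlim, Rcontinuity_abs.
Qed.

Lemma is_derive_apow s e : 0 < s -> is_derive (fun s => apow s e) s (e * apow s (e - 1)).
Proof.
  intros Hs. apply is_derive_ext_loc with (f := fun s => Rpower s e).
  - apply (locally_of_ball s s); auto. intros y Hy. apply Rabs_lt_between in Hy.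
    rewrite apow_pos; auto. lra.
  - rewrite apow_pos by auto. apply is_derive_Reals, derivable_pt_lim_power; auto.
Qed.

Lemma continuous_apow s e : 0 < e -> continuous (fun s => apow s e) s.
Proof.
  intros He. destruct (Rtotal_order s 0) as [Hs|[->|Hs]].
  - apply continuous_ext with (f := fun s => apow (- s) e).
    { intros; unfold apow; rewrite Rabs_Ropp; auto. }
    apply (continuous_compR (fun s => apow s e) (fun s => - s)).
    + apply continuity_pt_filterlim, continuity_pt_opp, continuity_pt_id.
    + apply (ex_derive_continuous (fun s => apow s e)). eexists. apply is_derive_apow; lra.
  - apply continuous_eps_delta. intros eps Heps.
    exists (Rpower eps (/ e)); split; [apply exp_pos|].
    intros y Hy. rewrite apow_0l, Rminus_0_r, Rabs_pos_eq by apply apow_ge0.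
    rewrite Rminus_0_r in Hy.
    destruct (Req_dec y 0) as [->|Hy0]; [rewrite apow_0l; auto|].
    rewrite apow_nz by auto. replace eps with (Rpower (Rpower eps (/ e)) e).
    + apply Rlt_Rpower_l; auto. split; auto. apply Rabs_pos_lt; auto.
    + rewrite Rpower_mult, Rinv_l by lra. apply Rpower_1; auto.
  - apply (ex_derive_continuous (fun s => apow s e)). eexists. apply is_derive_apow; auto.
Qed.

Lemma ex_RInt_continuousR (f : R -> R) (a b : R) :
  (forall z, Rmin a b <= z <= Rmax a b -> continuous f z) -> ex_RInt f a b.
Proof. intros H. apply (@ex_RInt_continuous R_CompleteNormedModule). exact H. Qed.

Lemma RInt_deriveR (f df : R -> R) (a b : R) :
  (forall x, Rmin a b <= x <= Rmax a b -> is_derive f x (df x)) ->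
  (forall x, Rmin a b <= x <= Rmax a b -> continuous df x) -> RInt df a b = f b - f a.
Proof.
  intros H1 H2. apply (@is_RInt_unique R_CompleteNormedModule).
  apply (@is_RInt_derive R_CompleteNormedModule); auto.
Qed.

Lemma continuous_extR (f g : R -> R) (x : R) :
  (forall t, f t = g t) -> continuous f x -> continuous g x.
Proof. intros H. apply continuous_ext. exact H. Qed.

Lemma is_derive_extR (f g : R -> R) (x l : R) :
  (forall t, f t = g t) -> is_derive f x l -> is_derive g x l.
Proof. intros H. apply is_derive_ext. exact H. Qed.

Lemma RInt_le_primitive (f g A : R -> R) (u v : R) :
  u <= v -> (forall s, u <= s <= v -> is_derive A s (g s) /\ continuous g s) ->
  ex_RInt f u v -> (forall s, u < s < v -> f s <= g s) -> RInt f u v <= A v - A u.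
Proof.
  intros Huv Hg Hf Hfg. rewrite <- (RInt_deriveR A g).
  - apply RInt_le; auto. apply ex_RInt_continuousR.
    intros z Hz. rewrite Rmin_left, Rmax_right in Hz by lra. apply Hg; lra.
  - intros s Hs. rewrite Rmin_left, Rmax_right in Hs by lra. apply Hg; lra.
  - intros s Hs. rewrite Rmin_left, Rmax_right in Hs by lra. apply Hg; lra.
Qed.

Lemma RInt_ge_primitive (f g A : R -> R) (u v : R) :
  u <= v -> (forall s, u <= s <= v -> is_derive A s (g s) /\ continuous g s) ->
  ex_RInt f u v -> (forall s, u < s < v -> g s <= f s) -> A v - A u <= RInt f u v.
Proof.
  intros Huv Hg Hf Hfg. rewrite <- (RInt_deriveR A g).
  - apply RInt_le; auto. apply ex_RInt_continuousR.
    intros z Hz. rewrite Rmin_left, Rmax_right in Hz by lra. apply Hg; lra.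
  - intros s Hs. rewrite Rmin_left, Rmax_right in Hs by lra. apply Hg; lra.
  - intros s Hs. rewrite Rmin_left, Rmax_right in Hs by lra. apply Hg; lra.
Qed.

Lemma continuous_nonincreasing_darboux (g : R -> R) :
  (forall x y, x <= y -> g y <= g x) ->
  (forall a b c, a < b -> g b <= c <= g a -> exists z, a <= z <= b /\ g z = c) ->
  forall x, continuous g x.
Proof.
  intros Hm Hd x0. apply continuous_eps_delta. intros eps He.
  assert (Hleft : exists d1, 0 < d1 /\ forall x, x0 - d1 < x <= x0 -> g x < g x0 + eps).
  { destruct (Rlt_or_le (g (x0 - 1)) (g x0 + eps)) as [H|H].
    - exists 1. split; [lra|]. intros x Hx. assert (g x <= g (x0 - 1)) by (apply Hm; lra). lra.
    - destruct (Hd (x0 - 1) x0 (g x0 + eps/2)) as [z [Hz Ez]]; [lra|lra|].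
      assert (z <> x0) by (intro; subst; lra).
      exists (x0 - z). split; [lra|]. intros x Hx. assert (g x <= g z) by (apply Hm; lra). lra. }
  assert (Hright : exists d2, 0 < d2 /\ forall x, x0 <= x < x0 + d2 -> g x0 - eps < g x).
  { destruct (Rlt_or_le (g x0 - eps) (g (x0 + 1))) as [H|H].
    - exists 1. split; [lra|]. intros x Hx. assert (g (x0 + 1) <= g x) by (apply Hm; lra). lra.
    - destruct (Hd x0 (x0 + 1) (g x0 - eps/2)) as [z [Hz Ez]]; [lra|lra|].
      assert (z <> x0) by (intro; subst; lra).
      exists (z - x0). split; [lra|]. intros x Hx. assert (g z <= g x) by (apply Hm; lra). lra. }
  destruct Hleft as [d1 [Hd1 H1]], Hright as [d2 [Hd2 H2]].
  exists (Rmin d1 d2). split; [apply Rmin_glb_lt; auto|]. intros y Hy.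
  assert (Rmin d1 d2 <= d1) by apply Rmin_l. assert (Rmin d1 d2 <= d2) by apply Rmin_r.
  apply Rabs_lt_between in Hy. apply Rabs_def1; destruct (Rle_or_lt y x0).
  - specialize (H1 y ltac:(lra)). lra.
  - assert (g y <= g x0) by (apply Hm; lra). lra.
  - assert (g x0 <= g y) by (apply Hm; lra). lra.
  - specialize (H2 y ltac:(lra)). lra.
Qed.

Lemma is_derive_local_inverse (T g : R -> R) (x d : R) :
  continuous g x -> (exists r, 0 < r /\ forall x', Rabs (x' - x) < r -> T (g x') = x') ->
  is_derive T (g x) d -> d <> 0 -> is_derive g x (/ d).
Proof.
  intros Hc [r [Hr HT]] Hd Hd0. apply is_derive_Reals. apply is_derive_Reals in Hd.
  intros eps He.
  assert (hd : 0 < Rabs d) by (apply Rabs_pos_lt; auto).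
  set (e' := Rmin (Rabs d / 2) (eps * (Rabs d * Rabs d) / 2)).
  assert (he1 : e' <= Rabs d / 2) by (unfold e'; apply Rmin_l).
  assert (he2 : e' <= eps * (Rabs d * Rabs d) / 2) by (unfold e'; apply Rmin_r).
  assert (he' : 0 < e') by (unfold e'; apply Rmin_glb_lt; [lra|]; assert (0 < Rabs d * Rabs d) by nra; nra).
  clearbody e'.
  destruct (Hd e' he') as [dT HdT].
  destruct (proj1 (continuous_eps_delta g x) Hc dT (cond_pos dT)) as [dg [Hdg Hg]].
  exists (mkposreal (Rmin dg r) (Rmin_glb_lt _ _ _ Hdg Hr)). intros k Hk0 Hk. simpl in Hk.
  assert (Hk1 : Rabs k < dg) by (apply Rlt_le_trans with (1 := Hk); apply Rmin_l).
  assert (Hk2 : Rabs k < r) by (apply Rlt_le_trans with (1 := Hk); apply Rmin_r).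
  set (h := g (x + k) - g x).
  assert (E1 : T (g (x + k)) = x + k) by (apply HT; replace (x + k - x) with k by ring; auto).
  assert (E0 : T (g x) = x) by (apply HT; rewrite Rminus_diag, Rabs_R0; auto).
  assert (hh : h <> 0) by (intro E; unfold h in E; replace (g (x + k)) with (g x) in E1 by lra; lra).
  assert (hh2 : Rabs h < dT) by (apply Hg; replace (x + k - x) with k by ring; auto).
  specialize (HdT h hh hh2). replace (g x + h) with (g (x + k)) in HdT by (unfold h; ring).
  rewrite E1, E0 in HdT. replace (x + k - x) with k in HdT by ring.
  (* the difference quotient of [g] is the inverse [h / k] of that of [T] *)
  set (q := k / h) in HdT.
  assert (Hq : Rabs q > Rabs d / 2).
  { assert (Rabs d <= Rabs q + Rabs (q - d)).
    { replace d with (q - (q - d)) at 1 by ring.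
      eapply Rle_trans; [apply Rabs_triang|]. rewrite Rabs_Ropp; lra. }
    lra. }
  assert (hq0 : q <> 0) by (intro E; rewrite E, Rabs_R0 in Hq; lra).
  replace (h / k) with (/ q) by (unfold q; field; auto).
  replace (/ q - / d) with ((d - q) / (q * d)) by (field; auto).
  unfold Rdiv. rewrite Rabs_mult, Rabs_inv, Rabs_mult, <- Rabs_Ropp.
  replace (- (d - q)) with (q - d) by ring.
  apply Rlt_le_trans with (e' * / (Rabs q * Rabs d)).
  - apply Rmult_lt_compat_r; auto. apply Rinv_0_lt_compat. apply Rmult_lt_0_compat; lra.
  - apply Rle_trans with ((eps * (Rabs d * Rabs d) / 2) * / (Rabs d / 2 * Rabs d)).
    + apply Rmult_le_compat; try lra.
      * apply Rlt_le, Rinv_0_lt_compat. apply Rmult_lt_0_compat; lra.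
      * apply Rinv_le_contravar; [apply Rmult_lt_0_compat; lra|]. apply Rmult_le_compat_r; lra.
    + right. field. lra.
Qed.

(* Mean value theorem: each difference quotient at [c] is a value of [g] near [c]. *)
Lemma is_derive_punctured (f g : R -> R) (c : R) :
  (forall x, continuous f x) -> continuous g c ->
  (exists r, 0 < r /\ forall y, 0 < Rabs (y - c) < r -> is_derive f y (g y)) ->
  is_derive f c (g c).
Proof.
  intros Hf Hg [r [Hr Hd]]. apply is_derive_Reals. intros eps He.
  destruct (proj1 (continuous_eps_delta g c) Hg eps He) as [dg [Hdg Hgc]].
  exists (mkposreal (Rmin dg r) (Rmin_glb_lt _ _ _ Hdg Hr)). intros h Hh0 Hh. simpl in Hh.
  assert (Hh1 : Rabs h < dg) by (apply Rlt_le_trans with (1 := Hh); apply Rmin_l).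
  assert (Hh2 : Rabs h < r) by (apply Rlt_le_trans with (1 := Hh); apply Rmin_r).
  assert (Hbetween : forall x, Rmin c (c + h) <= x <= Rmax c (c + h) -> Rabs (x - c) <= Rabs h).
  { intros x Hx. destruct (Rle_or_lt 0 h).
    - rewrite Rmin_left, Rmax_right in Hx by lra. rewrite !Rabs_pos_eq; lra.
    - rewrite Rmin_right, Rmax_left in Hx by lra. rewrite (Rabs_left h) by lra.
      apply Rabs_le; lra. }
  destruct (MVT_gen f c (c + h) g) as [xi [Hxi E]].
  - intros x Hx. apply Hd. split; [|specialize (Hbetween x); lra].
    apply Rabs_pos_lt. intro E. assert (x = c) by lra. subst x.
    destruct (Rle_or_lt 0 h).
    + rewrite Rmin_left in Hx by lra. lra.
    + rewrite Rmin_right, Rmax_left in Hx by lra. lra.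
  - intros x _. apply continuity_pt_filterlim. apply Hf.
  - replace (c + h - c) with h in E by ring. rewrite E.
    replace (g xi * h / h) with (g xi) by (field; auto).
    apply Hgc. specialize (Hbetween xi Hxi). lra.
Qed.

Lemma is_derive_off_levels (f g : R -> R) (L : R) :
  L <> 0 -> (forall x, continuous f x) -> (forall x, continuous g x) ->
  (forall x, x <> 0 -> Rabs x <> L -> is_derive f x (g x)) -> forall x, is_derive f x (g x).
Proof.
  intros HL Hf Hg Hd x.
  destruct (Req_dec x 0) as [->|E]; [|destruct (Req_dec (Rabs x) L) as [E'|E']; [|apply Hd; auto]].
  - apply is_derive_punctured; auto. exists (Rabs L). split; [apply Rabs_pos_lt; auto|].
    intros y [H1 H2]. rewrite Rminus_0_r in *. apply Hd.
    + intro; subst; rewrite Rabs_R0 in H1; lra.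
    + intro E. rewrite <- E, Rabs_Rabsolu in H2. lra.
  - apply is_derive_punctured; auto. exists (Rabs L). split; [apply Rabs_pos_lt; auto|].
    assert (0 <= L) by (rewrite <- E'; apply Rabs_pos).
    intros y [H1 H2]. apply Hd.
    + intro Hy0. rewrite Hy0, Rminus_0_l, Rabs_Ropp, E', Rabs_pos_eq in H2; lra.
    + intro E2. rewrite <- E2, Rabs_Rabsolu in H2. rewrite <- E' in E2.
      revert E2 H1 H2. unfold Rabs.
      destruct (Rcase_abs y), (Rcase_abs x), (Rcase_abs (y - x)), (Rcase_abs (- y)); intros; lra.
Qed.

Lemma Derive_n_of_derivatives k (D : nat -> R -> R) :
  (forall j x, (j < k)%nat -> is_derive (D j) x (D (S j) x)) ->
  forall j, (j <= k)%nat -> Derive_n (D 0%nat) j = D j.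
Proof.
  intros HD j. induction j as [|j IH]; intros Hj; [reflexivity|].
  apply functional_extensionality. intros x. simpl. rewrite IH by lia.
  apply is_derive_unique, HD. lia.
Qed.

Lemma CkWkinf_of_derivatives k (D : nat -> R -> R) :
  (forall j x, (j < k)%nat -> is_derive (D j) x (D (S j) x)) ->
  (forall j x, (j <= k)%nat -> continuous (D j) x) ->
  (forall j, (j <= k)%nat -> exists M, forall x, Rabs (D j x) <= M) ->
  CkWkinf k (D 0%nat).
Proof.
  intros HD Hc Hb. assert (E := Derive_n_of_derivatives k D HD).
  split; [split|].
  - intros j x Hj. rewrite E by lia. eexists. apply HD; auto.
  - intros j x Hj. rewrite E by auto. apply Hc; auto.
  - intros j Hj. rewrite E by auto. apply Hb; auto.
Qed.

Lemma CkWkinf_opp k (f : R -> R) : CkWkinf k f -> CkWkinf k (fun x => - f x).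
Proof.
  intros [[H1 H2] H3].
  assert (E : forall j, Derive_n (fun x => - f x) j = (fun x => - Derive_n f j x)).
  { intros j. apply functional_extensionality. intros x. apply Derive_n_opp. }
  split; [split|]; intros j; rewrite E.
  - intros x Hj. destruct (H1 j x Hj) as [l Hl]. exists (-1 * l).
    apply is_derive_extR with (f := fun x => -1 * Derive_n f j x); [intros; ring|].
    apply is_derive_scalR; auto.
  - intros x Hj. apply continuous_extR with (f := fun x => -1 * Derive_n f j x); [intros; ring|].
    apply continuous_scalR; auto.
  - intros Hj. destruct (H3 j Hj) as [M HM]. exists M. intros x. rewrite Rabs_Ropp; auto.
Qed.

Lemma continuous_comp_bounded (H f : R -> R) (m : R) :
  (forall s, continuous H s) -> (forall x, 0 <= f x <= m) -> exists M, forall x, Rabs (H (f x)) <= M.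
Proof.
  intros Hc Hf. destruct (Rle_or_lt 0 m) as [Hm|Hm]; [|specialize (Hf 0); lra].
  destruct (Req_dec m 0) as [->|Hm0].
  - exists (Rabs (H 0)). intros x. replace (f x) with 0 by (specialize (Hf x); lra). lra.
  - destruct (continuity_ab_maj (fun s => Rabs (H s)) 0 m) as [s [Hs _]]; [lra| |].
    + intros c _. apply continuity_pt_filterlim, continuous_absR, Hc.
    + exists (Rabs (H s)). intros x. apply Hs, Hf.
Qed.

(** * The energy potential and the descent time *)

Section Profile.

Variables p a b w : R.
Hypothesis hp : -1 < p <= 2/3.
Hypothesis ha : 0 < a.
Hypothesis hb : 0 < b.
Hypothesis hw : 0 < w.
Hypothesis hab : p = 2/3 -> a < b.

Definition force s := w * s + a * apow s (p + 1) - b * apow s (5/3).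
Definition pot s := w * s ^ 2 / 2 + a / (p + 2) * apow s (p + 2) - 3 * b / 8 * apow s (8/3).
Definition pot_quot s := w / 2 + a / (p + 2) * apow s p - 3 * b / 8 * apow s (2/3).

Lemma pot_eq s : pot s = s ^ 2 * pot_quot s.
Proof.
  unfold pot, pot_quot. rewrite <- apow_2. replace (p + 2) with (2 + p) by ring.
  replace (8/3) with (2 + 2/3) by field. rewrite <- !apow_add. field. lra.
Qed.

Lemma pot_0 : pot 0 = 0.
Proof. unfold pot. rewrite !apow_0l. field. lra. Qed.

Lemma force_0 : force 0 = 0.
Proof. unfold force. rewrite !apow_0l. ring. Qed.

Lemma is_derive_pot s : 0 < s -> is_derive pot s (force s).
Proof.
  intros Hs. unfold pot, force. apply is_derive_minusR; [apply is_derive_plusR|].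
  - auto_derive; auto. field.
  - apply is_derive_val with (a / (p + 2) * ((p + 2) * apow s (p + 2 - 1))).
    + replace (p + 2 - 1) with (p + 1) by ring. field. lra.
    + apply is_derive_scalR, is_derive_apow; auto.
  - apply is_derive_val with (3 * b / 8 * ((8/3) * apow s (8/3 - 1))).
    + replace (8/3 - 1) with (5/3) by field. field.
    + apply is_derive_scalR, is_derive_apow; auto.
Qed.

Lemma continuous_pot s : continuous pot s.
Proof.
  unfold pot. apply continuous_minusR; [apply continuous_plusR|].
  - apply continuous_multR; [|apply continuous_constR].
    apply continuous_scalR, (continuous_compR (fun y => y ^ 2)); [apply continuous_idR|].
    apply continuity_pt_filterlim, derivable_continuous_pt, derivable_pt_pow.
  - apply continuous_scalR, continuous_apow; lra.
  - apply continuous_scalR, continuous_apow; lra.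
Qed.

Lemma continuous_force s : continuous force s.
Proof.
  unfold force. apply continuous_minusR; [apply continuous_plusR|].
  - apply continuous_scalR, continuous_idR.
  - apply continuous_scalR, continuous_apow; lra.
  - apply continuous_scalR, continuous_apow; lra.
Qed.

(* In the critical case [p = 2/3] the sign of [pot_quot] at infinity is that of [a - b]. *)
Lemma pot_quot_neg_critical : p = 2/3 -> exists t, pot_quot (exp t) < 0.
Proof.
  intros E. specialize (hab E). set (c := 4 * w / (3 * (b - a))).
  assert (Hc : 0 < c) by (apply Rdiv_lt_0_compat; lra).
  exists (3/2 * Rabs (ln c) + 1). unfold pot_quot. rewrite !apow_exp, E.
  assert (HX : exp (2/3 * (3/2 * Rabs (ln c) + 1)) > c).
  { apply Rlt_gt. rewrite <- (exp_ln c) at 1 by auto. apply exp_increasing.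
    assert (H1 := Rle_abs (ln c)). lra. }
  set (X := exp (2/3 * (3/2 * Rabs (ln c) + 1))) in *.
  assert (3 * (b - a) * X > 4 * w).
  { apply Rmult_gt_compat_l with (r := 3 * (b - a)) in HX; [|lra].
    unfold c in HX. replace (3 * (b - a) * (4 * w / (3 * (b - a)))) with (4 * w) in HX by (field; lra).
    lra. }
  replace (a / (2/3 + 2)) with (3 * a / 8) by field. nra.
Qed.

(* Below the critical exponent, [apow s (2/3)] dominates [apow s p] at infinity. *)
Lemma pot_quot_neg_subcritical : p < 2/3 -> exists t, pot_quot (exp t) < 0.
Proof.
  intros Hp. set (q := 2/3 - p). assert (hq : 0 < q) by (unfold q; lra).
  set (K := 8 * a / ((p + 2) * b)). assert (hK : 0 < K) by (unfold K; apply Rdiv_lt_0_compat; nra).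
  set (t := Rabs (ln K) / q + 3/2 * Rabs (ln (2 * w / b)) + 1).
  assert (ht1 : q * t >= ln K).
  { unfold t. assert (H1 := Rle_abs (ln K)). assert (0 <= Rabs (ln (2 * w / b))) by apply Rabs_pos.
    replace (q * (Rabs (ln K) / q + 3 / 2 * Rabs (ln (2 * w / b)) + 1))
      with (Rabs (ln K) + q * (3 / 2 * Rabs (ln (2 * w / b)) + 1)) by (field; lra).
    assert (0 < q * (3/2 * Rabs (ln (2 * w / b)) + 1)) by (apply Rmult_lt_0_compat; lra). lra. }
  assert (ht2 : 2/3 * t > ln (2 * w / b)).
  { unfold t. assert (H1 := Rle_abs (ln (2 * w / b))).
    assert (0 <= Rabs (ln K) / q) by (apply Rdiv_le_0_compat; [apply Rabs_pos|lra]). lra. }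
  exists t. unfold pot_quot. rewrite !apow_exp.
  replace (exp (p * t)) with (exp (2/3 * t) * exp (- (q * t)))
    by (rewrite <- exp_plus; f_equal; unfold q; ring).
  assert (E2 : exp (- (q * t)) <= / K).
  { rewrite <- (exp_ln K), <- exp_Ropp by auto.
    destruct (Req_dec (q * t) (ln K)) as [->|Hne]; [lra|]. left. apply exp_increasing. lra. }
  assert (E3 : exp (2/3 * t) > 2 * w / b).
  { apply Rlt_gt. rewrite <- (exp_ln (2 * w / b)) at 1 by (apply Rdiv_lt_0_compat; lra).
    apply exp_increasing. lra. }
  set (X := exp (2/3 * t)) in *. set (Y := exp (- (q * t))) in *.
  assert (0 < X) by apply exp_pos.
  assert (a / (p + 2) * Y <= b / 8).
  { apply Rmult_le_compat_l with (r := a / (p + 2)) in E2; [|apply Rlt_le, Rdiv_lt_0_compat; lra].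
    replace (a / (p + 2) * / K) with (b / 8) in E2 by (unfold K; field; split; lra). lra. }
  assert (w / 2 < b * X / 4).
  { apply Rmult_lt_compat_l with (r := b / 4) in E3; [|lra].
    replace (b / 4 * (2 * w / b)) with (w / 2) in E3 by (field; lra). lra. }
  nra.
Qed.

Lemma pot_neg_somewhere : exists s, 0 < s /\ pot s < 0.
Proof.
  destruct (Req_dec p (2/3)) as [E|E];
    [destruct (pot_quot_neg_critical E) as [t Ht]|destruct (pot_quot_neg_subcritical ltac:(lra)) as [t Ht]];
    exists (exp t); split; try apply exp_pos; rewrite pot_eq;
    assert (0 < exp t ^ 2) by (apply pow_lt, exp_pos); nra.
Qed.

Lemma pot_pos_near_0 : exists d, 0 < d /\ forall u, 0 < u < d -> 0 < pot u.
Proof.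
  destruct (proj1 (continuous_eps_delta _ 0) (continuous_apow 0 (2/3) ltac:(lra)) (4 * w / (3 * b)))
    as [d [Hd H]]; [apply Rdiv_lt_0_compat; lra|].
  exists d; split; auto. intros u Hu. rewrite pot_eq. apply Rmult_lt_0_compat; [apply pow_lt; lra|].
  specialize (H u). rewrite apow_0l, !Rminus_0_r, Rabs_pos_eq, Rabs_pos_eq in H by (lra || apply apow_ge0).
  specialize (H (proj2 Hu)).
  unfold pot_quot. assert (0 <= a / (p + 2) * apow u p).
  { apply Rmult_le_pos; [apply Rlt_le, Rdiv_lt_0_compat; lra|apply apow_ge0]. }
  assert (3 * b / 8 * apow u (2/3) < 3 * b / 8 * (4 * w / (3 * b))) by (apply Rmult_lt_compat_l; lra).
  replace (3 * b / 8 * (4 * w / (3 * b))) with (w / 2) in * by (field; lra). lra.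
Qed.

Definition pot_pos_upto s := 0 <= s /\ forall u, 0 < u <= s -> 0 < pot u.

Lemma pot_pos_upto_bound : bound pot_pos_upto.
Proof.
  destruct pot_neg_somewhere as [s1 [H1 H2]]. exists s1. intros s [Hs H].
  destruct (Rle_or_lt s s1); auto. specialize (H s1). lra.
Qed.

Lemma pot_pos_upto_0 : exists s, pot_pos_upto s.
Proof. exists 0. split; [lra|]. intros; lra. Qed.

(* [peak] is the first positive zero of [pot]: the maximum [phi 0] of the profile. *)
Definition peak : R := proj1_sig (completeness pot_pos_upto pot_pos_upto_bound pot_pos_upto_0).

Lemma peak_lub : is_lub pot_pos_upto peak.
Proof. unfold peak. destruct completeness; auto. Qed.

Lemma peak_pos : 0 < peak.
Proof.
  destruct pot_pos_near_0 as [d [Hd H]]. assert (pot_pos_upto (d/2)).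
  { split; [lra|]. intros u Hu. apply H. lra. }
  destruct peak_lub as [Hub _]. specialize (Hub _ H0). lra.
Qed.

Lemma pot_pos_below_peak u : 0 < u < peak -> 0 < pot u.
Proof.
  intros Hu. destruct peak_lub as [H1 H2].
  destruct (Classical_Prop.classic (exists s, pot_pos_upto s /\ u < s)) as [[s [[_ Hs] Hus]]|N].
  - apply Hs; lra.
  - assert (is_upper_bound pot_pos_upto u).
    { intros s Hs. destruct (Rle_or_lt s u); auto. exfalso; apply N; exists s; auto. }
    specialize (H2 _ H). lra.
Qed.

Lemma pot_peak : pot peak = 0.
Proof.
  assert (h0 := peak_pos).
  destruct (Rtotal_order (pot peak) 0) as [Hn|[He|Hpos]]; auto; exfalso.
  - destruct (proj1 (continuous_eps_delta _ peak) (continuous_pot peak) (- pot peak)) as [d [Hd H]]; [lra|].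
    set (u := Rmax (peak/2) (peak - d/2)).
    assert (peak/2 <= u) by apply Rmax_l. assert (peak - d/2 <= u) by apply Rmax_r.
    assert (u < peak) by (apply Rmax_lub_lt; lra).
    assert (0 < pot u) by (apply pot_pos_below_peak; lra).
    specialize (H u ltac:(rewrite Rabs_left; lra)). apply Rabs_lt_between in H. lra.
  - destruct (proj1 (continuous_eps_delta _ peak) (continuous_pot peak) (pot peak)) as [d [Hd H]]; [lra|].
    assert (pot_pos_upto (peak + d/2)).
    { split; [lra|]. intros u Hu. destruct (Rlt_or_le u peak); [apply pot_pos_below_peak; lra|].
      specialize (H u ltac:(rewrite Rabs_pos_eq; lra)). apply Rabs_lt_between in H. lra. }
    destruct peak_lub as [H1 _]. specialize (H1 _ H0). lra.
Qed.

(* Eliminating [w] (or [a]) with [pot_quot peak = 0] leaves a quantity of fixed sign. *)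
Lemma force_peak_neg : force peak < 0.
Proof.
  assert (h0 := peak_pos). assert (E := pot_peak). rewrite pot_eq in E.
  assert (Eq : pot_quot peak = 0).
  { assert (0 < peak ^ 2) by (apply pow_lt; lra). apply Rmult_integral in E. destruct E; auto. lra. }
  unfold pot_quot, force in *.
  replace (p + 1) with (1 + p) by ring. replace (5/3) with (1 + 2/3) by field.
  rewrite <- !apow_add, apow_1, Rabs_pos_eq by lra.
  assert (hX := apow_gt0 peak p ltac:(lra)). assert (hY := apow_gt0 peak (2/3) ltac:(lra)).
  set (X := apow peak p) in *. set (Y := apow peak (2/3)) in *. clearbody X Y.
  enough (w + a * X - b * Y < 0) by nra.
  destruct (Rle_or_lt p 0) as [Hp|Hp].
  - assert (Ew : w = 3 * b * Y / 4 - 2 * a * X / (p + 2)).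
    { apply (Rmult_eq_reg_l (1/2)); [|lra].
      replace (1/2 * w) with (w / 2) by field.
      replace (w / 2) with (3 * b / 8 * Y - a / (p + 2) * X) by lra. field. lra. }
    rewrite Ew.
    replace (3 * b * Y / 4 - 2 * a * X / (p + 2) + a * X - b * Y)
      with (- (b * Y / 4) + a * X * (p / (p + 2))) by (field; lra).
    assert (p / (p + 2) <= 0).
    { unfold Rdiv. assert (0 < / (p + 2)) by (apply Rinv_0_lt_compat; lra). nra. }
    assert (0 < a * X) by nra. nra.
  - assert (EaX : a * X = (p + 2) * (3 * b * Y / 8 - w / 2)).
    { replace (3 * b * Y / 8 - w / 2) with (a / (p + 2) * X) by lra. field. lra. }
    rewrite EaX.
    replace (w + (p + 2) * (3 * b * Y / 8 - w / 2) - b * Y)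
      with (- (p * w / 2) + b * Y * (3 * p - 2) / 8) by field.
    assert (0 < b * Y) by nra. assert (b * Y * (3 * p - 2) <= 0) by nra. nra.
Qed.

Definition slope s := sqrt (2 * pot s).

Lemma slope_pos s : 0 < s < peak -> 0 < slope s.
Proof. intros Hs. apply sqrt_lt_R0. assert (0 < pot s) by (apply pot_pos_below_peak; auto). lra. Qed.

Lemma is_derive_slope s : 0 < s < peak -> is_derive slope s (force s / slope s).
Proof.
  intros Hs. assert (0 < pot s) by (apply pot_pos_below_peak; auto).
  apply is_derive_val with (2 * force s / (2 * sqrt (2 * pot s))).
  - unfold slope. field. apply Rgt_not_eq, sqrt_lt_R0; lra.
  - apply (is_derive_sqrtR (fun s => 2 * pot s)); [|lra]. apply is_derive_scalR, is_derive_pot; lra.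
Qed.

Lemma continuous_slope s : continuous slope s.
Proof. apply continuous_sqrtR, continuous_scalR, continuous_pot. Qed.

Lemma slope_peak : slope peak = 0.
Proof. unfold slope. rewrite pot_peak, Rmult_0_r. apply sqrt_0. Qed.

Lemma slope_0 : slope 0 = 0.
Proof. unfold slope. rewrite pot_0, Rmult_0_r. apply sqrt_0. Qed.

Lemma pot_ge_linear_near_peak :
  exists ytop, 0 < ytop < peak /\ exists c, 0 < c /\ forall s, ytop <= s <= peak -> c * (peak - s) <= pot s.
Proof.
  assert (h0 := peak_pos). assert (hg := force_peak_neg).
  destruct (proj1 (continuous_eps_delta _ peak) (continuous_force peak) (- force peak / 2)) as [d [Hd H]];
    [lra|].
  set (ytop := Rmax (peak/2) (peak - d/2)).
  assert (peak/2 <= ytop) by apply Rmax_l. assert (peak - d/2 <= ytop) by apply Rmax_r.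
  assert (ytop < peak) by (apply Rmax_lub_lt; lra).
  exists ytop. split; [lra|]. exists (- force peak / 2). split; [lra|].
  intros s Hs. destruct (Req_dec s peak) as [->|Hne]; [rewrite pot_peak; lra|].
  destruct (MVT_cor2 pot force s peak) as [xi [E Hxi]]; [lra| |].
  { intros c Hc. apply is_derive_Reals, is_derive_pot. lra. }
  rewrite pot_peak in E. specialize (H xi ltac:(rewrite Rabs_left; lra)).
  apply Rabs_lt_between in H. nra.
Qed.

Definition ytop := proj1_sig (constructive_indefinite_description _ pot_ge_linear_near_peak).

Lemma ytop_spec :
  0 < ytop < peak /\ exists c, 0 < c /\ forall s, ytop <= s <= peak -> c * (peak - s) <= pot s.
Proof. unfold ytop. destruct constructive_indefinite_description; auto. Qed.

Lemma pot_ge_apow_near_0 :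
  p < 0 -> exists y1 c1, 0 < y1 < peak /\ 0 < c1 /\ forall s, 0 < s <= y1 -> c1 * apow s (p + 2) <= pot s.
Proof.
  intros Hp. assert (h0 := peak_pos).
  destruct (proj1 (continuous_eps_delta _ 0) (continuous_apow 0 (2/3 - p) ltac:(lra))
              (4 * a / (3 * b * (p + 2)))) as [d [Hd H]]; [apply Rdiv_lt_0_compat; nra|].
  exists (Rmin (d/2) (peak/2)), (a / (2 * (p + 2))).
  assert (Rmin (d/2) (peak/2) <= d/2) by apply Rmin_l.
  assert (Rmin (d/2) (peak/2) <= peak/2) by apply Rmin_r.
  assert (0 < Rmin (d/2) (peak/2)) by (apply Rmin_glb_lt; lra).
  split; [lra|]. split; [apply Rdiv_lt_0_compat; lra|].
  intros s Hs. specialize (H s).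
  rewrite apow_0l, !Rminus_0_r, Rabs_pos_eq, Rabs_pos_eq in H by (lra || apply apow_ge0).
  specialize (H ltac:(lra)).
  assert (EF : pot s = apow s (p + 2) * (w / 2 * apow s (- p) + a / (p + 2) - 3 * b / 8 * apow s (2/3 - p))).
  { assert (M1 : apow s (p + 2) * apow s (- p) = s ^ 2) by (rewrite apow_add, <- apow_2; f_equal; ring).
    assert (M2 : apow s (p + 2) * apow s (2/3 - p) = apow s (8/3)) by (rewrite apow_add; f_equal; field).
    unfold pot. rewrite <- M1, <- M2. field. lra. }
  rewrite EF. assert (hP := apow_gt0 s (p + 2) ltac:(lra)).
  assert (0 <= apow s (- p)) by apply apow_ge0.
  assert (3 * b / 8 * apow s (2/3 - p) < 3 * b / 8 * (4 * a / (3 * b * (p + 2))))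
    by (apply Rmult_lt_compat_l; lra).
  replace (3 * b / 8 * (4 * a / (3 * b * (p + 2)))) with (a / (2 * (p + 2))) in * by (field; lra).
  assert (a / (p + 2) = 2 * (a / (2 * (p + 2)))) by (field; lra).
  rewrite (Rmult_comm (apow s (p + 2))). apply Rmult_le_compat_r; nra.
Qed.

Definition quad_const := w / 2 + a / (p + 2) * apow peak p.

Lemma quad_const_pos : 0 < quad_const.
Proof.
  unfold quad_const. assert (0 <= a / (p + 2) * apow peak p); [|lra].
  apply Rmult_le_pos; [apply Rlt_le, Rdiv_lt_0_compat; lra|apply apow_ge0].
Qed.

Lemma pot_le_quadratic : 0 <= p -> forall s, 0 < s <= peak -> pot s <= quad_const * s ^ 2.
Proof.
  intros Hp s Hs. rewrite pot_eq, Rmult_comm. apply Rmult_le_compat_r; [apply pow2_ge_0|].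
  unfold pot_quot, quad_const.
  assert (apow s p <= apow peak p) by (apply apow_le; lra).
  assert (0 <= apow s (2/3)) by apply apow_ge0.
  assert (a / (p + 2) * apow s p <= a / (p + 2) * apow peak p)
    by (apply Rmult_le_compat_l; auto; apply Rlt_le, Rdiv_lt_0_compat; lra).
  assert (0 <= 3 * b / 8 * apow s (2/3)) by (apply Rmult_le_pos; lra). lra.
Qed.

Definition inv_slope s := / slope s.

Lemma inv_slope_pos s : 0 < s < peak -> 0 < inv_slope s.
Proof. intros; apply Rinv_0_lt_compat, slope_pos; auto. Qed.

Lemma continuous_inv_slope s : 0 < s < peak -> continuous inv_slope s.
Proof. intros H. apply continuous_invR; [apply continuous_slope|apply Rgt_not_eq, slope_pos; auto]. Qed.

Lemma ex_RInt_inv_slope u v : 0 < u < peak -> 0 < v < peak -> ex_RInt inv_slope u v.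
Proof.
  intros Hu Hv. apply ex_RInt_continuousR. intros z Hz. apply continuous_inv_slope.
  assert (Rmin u v > 0) by (apply Rmin_glb_lt; lra).
  assert (Rmax u v < peak) by (apply Rmax_lub_lt; lra). lra.
Qed.

Definition climb y := RInt inv_slope ytop y.

Lemma is_derive_climb y : 0 < y < peak -> is_derive climb y (inv_slope y).
Proof.
  intros Hy. destruct ytop_spec as [Hy0 _].
  apply (@is_derive_RInt R_CompleteNormedModule inv_slope climb ytop y).
  - apply (locally_of_ball y (Rmin y (peak - y))); [apply Rmin_glb_lt; lra|].
    intros z Hz. assert (Rmin y (peak - y) <= y) by apply Rmin_l.
    assert (Rmin y (peak - y) <= peak - y) by apply Rmin_r.
    apply Rabs_lt_between in Hz.
    apply (@RInt_correct R_CompleteNormedModule), ex_RInt_inv_slope; lra.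
  - apply continuous_inv_slope; auto.
Qed.

Lemma climb_increasing u v : 0 < u < v -> v < peak -> climb u < climb v.
Proof.
  intros Hu Hv. destruct (MVT_cor2 climb inv_slope u v) as [xi [E Hxi]]; [lra| |].
  - intros c Hc. apply is_derive_Reals, is_derive_climb. lra.
  - assert (0 < inv_slope xi) by (apply inv_slope_pos; lra). nra.
Qed.

(* Near [peak], [pot] vanishes linearly, so [inv_slope] is integrable there. *)
Lemma climb_bounded : exists B, forall y, ytop <= y < peak -> climb y <= B.
Proof.
  destruct ytop_spec as [Hy0 [c [Hc Hlin]]].
  assert (hk : 0 < sqrt (2 * c)) by (apply sqrt_lt_R0; lra).
  set (A := fun s => - 2 / sqrt (2 * c) * sqrt (peak - s)).
  exists (- A ytop). intros y Hy.
  assert (A y <= 0).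
  { unfold A. assert (0 <= sqrt (peak - y)) by apply sqrt_pos.
    assert (0 < 2 / sqrt (2 * c)) by (apply Rdiv_lt_0_compat; lra). nra. }
  enough (climb y <= A y - A ytop) by lra.
  apply (RInt_le_primitive inv_slope (fun s => / (sqrt (2 * c) * sqrt (peak - s))));
    [lra| |apply ex_RInt_inv_slope; lra|].
  - intros s Hs. assert (0 < sqrt (peak - s)) by (apply sqrt_lt_R0; lra). split.
    + unfold A. apply is_derive_val with (- 2 / sqrt (2 * c) * (- 1 / (2 * sqrt (peak - s)))); [field; lra|].
      apply is_derive_scalR, (is_derive_sqrtR (fun s => peak - s)); [auto_derive; auto|lra].
    + apply continuous_invR; [|apply Rgt_not_eq, Rmult_lt_0_compat; lra].
      apply continuous_scalR, continuous_sqrtR, continuous_minusR;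
        [apply continuous_constR|apply continuous_idR].
  - intros s Hs. unfold inv_slope. apply Rinv_le_contravar.
    + apply Rmult_lt_0_compat; auto. apply sqrt_lt_R0; lra.
    + unfold slope. rewrite <- sqrt_mult by lra. apply sqrt_le_1_alt.
      assert (c * (peak - s) <= pot s) by (apply Hlin; lra). lra.
Qed.

Definition climbs z := exists y, ytop <= y < peak /\ z = climb y.

Lemma climbs_bound : bound climbs.
Proof. destruct climb_bounded as [B HB]. exists B. intros z [y [Hy ->]]. apply HB; auto. Qed.

Lemma climbs_ne : exists z, climbs z.
Proof. destruct ytop_spec as [Hy0 _]. exists (climb ytop), ytop. split; auto; lra. Qed.

Definition top_time : R := proj1_sig (completeness climbs climbs_bound climbs_ne).

Lemma top_time_lub : is_lub climbs top_time.
Proof. unfold top_time. destruct completeness; auto. Qed.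

(* The time the profile needs to descend from [peak] to height [y]. *)
Definition hit_time y := top_time - climb y.

Lemma hit_time_pos y : 0 < y < peak -> 0 < hit_time y.
Proof.
  intros Hy. destruct ytop_spec as [Hy0 _]. destruct top_time_lub as [H1 _]. unfold hit_time.
  set (y' := Rmax ytop ((y + peak)/2)). assert (ytop <= y') by apply Rmax_l.
  assert ((y + peak)/2 <= y') by apply Rmax_r. assert (y' < peak) by (apply Rmax_lub_lt; lra).
  assert (climb y < climb y') by (apply climb_increasing; lra).
  assert (climb y' <= top_time) by (apply H1; exists y'; split; auto; lra). lra.
Qed.

Lemma hit_time_small eps : 0 < eps -> exists y, 0 < y < peak /\ hit_time y < eps.
Proof.
  intros He. destruct ytop_spec as [Hy0 _]. destruct top_time_lub as [H1 H2].
  destruct (Classical_Prop.classic (exists y, ytop <= y < peak /\ top_time - eps < climb y))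
    as [[y [Hy Hl]]|N].
  - exists y. split; [lra|]. unfold hit_time; lra.
  - assert (is_upper_bound climbs (top_time - eps)).
    { intros z [y [Hy ->]]. destruct (Rle_or_lt (climb y) (top_time - eps)); auto.
      exfalso; apply N; exists y; auto. }
    specialize (H2 _ H). lra.
Qed.

Lemma hit_time_decreasing u v : 0 < u < v -> v < peak -> hit_time v < hit_time u.
Proof. intros; unfold hit_time. assert (climb u < climb v) by (apply climb_increasing; auto). lra. Qed.

Lemma hit_time_inj u v : 0 < u < peak -> 0 < v < peak -> hit_time u = hit_time v -> u = v.
Proof.
  intros Hu Hv E. destruct (Rtotal_order u v) as [H|[H|H]]; auto.
  - assert (hit_time v < hit_time u) by (apply hit_time_decreasing; lra). lra.
  - assert (hit_time u < hit_time v) by (apply hit_time_decreasing; lra). lra.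
Qed.

Lemma is_derive_hit_time y : 0 < y < peak -> is_derive hit_time y (- inv_slope y).
Proof.
  intros Hy. unfold hit_time. apply is_derive_val with (0 - inv_slope y); [ring|].
  apply is_derive_minusR; [apply is_derive_constR|apply is_derive_climb; auto].
Qed.

Lemma continuous_hit_time y : 0 < y < peak -> continuous hit_time y.
Proof. intros Hy. apply (ex_derive_continuous hit_time). eexists; apply is_derive_hit_time; auto. Qed.

Lemma hit_time_split y z : 0 < y <= z -> z < peak ->
  hit_time y = top_time + RInt inv_slope y z + RInt inv_slope z ytop.
Proof.
  intros Hy Hz. destruct ytop_spec as [Hy0 _]. unfold hit_time, climb.
  rewrite <- (@opp_RInt_swap R_CompleteNormedModule) by (apply ex_RInt_inv_slope; lra).
  rewrite <- (@RInt_Chasles R_CompleteNormedModule inv_slope y z ytop) by (apply ex_RInt_inv_slope; lra).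
  change (top_time - - (RInt inv_slope y z + RInt inv_slope z ytop)
    = top_time + RInt inv_slope y z + RInt inv_slope z ytop). ring.
Qed.

(* For [p < 0], [pot s >= c s^(p+2)] makes [inv_slope] integrable at [0]: finite descent time. *)
Lemma hit_time_bounded : p < 0 -> exists M, forall y, 0 < y < peak -> hit_time y <= M.
Proof.
  intros Hp. destruct (pot_ge_apow_near_0 Hp) as [y1 [c1 [Hy1 [Hc1 Hlow]]]].
  destruct ytop_spec as [Hy0 _].
  set (y2 := Rmin y1 ytop). assert (y2 <= y1) by apply Rmin_l. assert (y2 <= ytop) by apply Rmin_r.
  assert (0 < y2) by (apply Rmin_glb_lt; lra). clearbody y2.
  assert (hk : 0 < sqrt (2 * c1)) by (apply sqrt_lt_R0; lra).
  set (A := fun s => / ((- p / 2) * sqrt (2 * c1)) * apow s (- p / 2)).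
  assert (Hlow_time : forall y, 0 < y <= y2 -> hit_time y <= top_time + A y2 + RInt inv_slope y2 ytop).
  { intros y Hy. rewrite (hit_time_split y y2) by lra.
    assert (0 <= A y).
    { apply Rmult_le_pos; [|apply apow_ge0]. apply Rlt_le, Rinv_0_lt_compat, Rmult_lt_0_compat; lra. }
    enough (RInt inv_slope y y2 <= A y2 - A y) by lra.
    apply (RInt_le_primitive inv_slope (fun s => / (sqrt (2 * c1) * apow s ((p + 2) / 2)))); [lra| |
      apply ex_RInt_inv_slope; lra|].
    - intros s Hs. split.
      + unfold A. apply is_derive_val with
          (/ ((- p / 2) * sqrt (2 * c1)) * ((- p / 2) * apow s (- p / 2 - 1))).
        * replace (- p / 2 - 1) with (- ((p + 2) / 2)) by field. rewrite apow_opp by lra.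
          field. split; [apply Rgt_not_eq, apow_gt0; lra|split; lra].
        * apply is_derive_scalR, is_derive_apow; lra.
      + apply continuous_invR; [apply continuous_scalR, continuous_apow; lra|].
        apply Rgt_not_eq, Rmult_lt_0_compat; auto. apply apow_gt0; lra.
    - intros s Hs. unfold inv_slope. apply Rinv_le_contravar.
      + apply Rmult_lt_0_compat; auto. apply apow_gt0; lra.
      + unfold slope. rewrite <- (sqrt_square (apow s ((p + 2) / 2))) by apply apow_ge0.
        rewrite apow_add, <- sqrt_mult by (lra || apply apow_ge0). apply sqrt_le_1_alt.
        replace ((p + 2) / 2 + (p + 2) / 2) with (p + 2) by field.
        assert (c1 * apow s (p + 2) <= pot s) by (apply Hlow; lra). lra. }
  exists (top_time + A y2 + RInt inv_slope y2 ytop). intros y Hy. destruct (Rle_or_lt y y2).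
  - apply Hlow_time; lra.
  - apply Rle_trans with (hit_time y2); [apply Rlt_le, hit_time_decreasing; lra|apply Hlow_time; lra].
Qed.

(* For [p >= 0], [pot s <= C s^2] makes [inv_slope] at least [1 / (sqrt (2 C) s)]: log divergence. *)
Lemma hit_time_unbounded : 0 <= p -> forall M, exists y, 0 < y < peak /\ M < hit_time y.
Proof.
  intros Hp M. destruct ytop_spec as [Hy0 _].
  assert (hC := quad_const_pos). assert (hk : 0 < sqrt (2 * quad_const)) by (apply sqrt_lt_R0; lra).
  set (K := (Rabs (M - top_time) + 1) * sqrt (2 * quad_const)).
  assert (hK : 0 < K).
  { apply Rmult_lt_0_compat; auto. assert (0 <= Rabs (M - top_time)) by apply Rabs_pos. lra. }
  set (y := ytop * exp (- K)).
  assert (hy : 0 < y) by (apply Rmult_lt_0_compat; [lra|apply exp_pos]).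
  assert (hy' : y < ytop).
  { assert (exp (- K) < 1) by (rewrite <- exp_0; apply exp_increasing; lra). unfold y. nra. }
  set (A := fun s => / sqrt (2 * quad_const) * ln s).
  assert (EA : A ytop - A y = K / sqrt (2 * quad_const)).
  { unfold A, y. rewrite ln_mult, ln_exp by (lra || apply exp_pos). field. lra. }
  assert (A ytop - A y <= RInt inv_slope y ytop).
  { apply (RInt_ge_primitive inv_slope (fun s => / (sqrt (2 * quad_const) * s))); [lra| |
      apply ex_RInt_inv_slope; lra|].
    - intros s Hs. split.
      + unfold A. apply is_derive_val with (/ sqrt (2 * quad_const) * / s); [field; lra|].
        apply is_derive_scalR, is_derive_Reals, derivable_pt_lim_ln; lra.
      + apply continuous_invR; [apply continuous_scalR, continuous_idR|].
        apply Rgt_not_eq, Rmult_lt_0_compat; lra.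
    - intros s Hs. unfold inv_slope. apply Rinv_le_contravar; [apply slope_pos; lra|].
      replace (sqrt (2 * quad_const) * s) with (sqrt (2 * quad_const * s ^ 2))
        by (rewrite sqrt_mult, sqrt_pow2 by (lra || apply pow2_ge_0); reflexivity).
      apply sqrt_le_1_alt. assert (pot s <= quad_const * s ^ 2) by (apply pot_le_quadratic; lra). lra. }
  exists y. split; [lra|].
  rewrite (hit_time_split y ytop), RInt_point by lra.
  assert (K / sqrt (2 * quad_const) = Rabs (M - top_time) + 1) by (unfold K; field; lra).
  assert (M - top_time <= Rabs (M - top_time)) by apply Rle_abs.
  change (zero : R) with 0. lra.
Qed.

Definition hit_times z := exists y, 0 < y < peak /\ z = hit_time y.

Lemma hit_times_bound : p < 0 -> bound hit_times.
Proof. intros Hp. destruct (hit_time_bounded Hp) as [M HM]. exists M. intros z [y [Hy ->]]. auto. Qed.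

Lemma hit_times_ne : exists z, hit_times z.
Proof. assert (h0 := peak_pos). exists (hit_time (peak/2)), (peak/2). split; auto; lra. Qed.

(* The radius of the support when [p < 0]; the junk value [-1] is never used otherwise. *)
Definition radius : R :=
  match Rlt_dec p 0 with
  | left H => proj1_sig (completeness hit_times (hit_times_bound H) hit_times_ne)
  | right _ => -1
  end.

Lemma radius_lub : p < 0 -> is_lub hit_times radius.
Proof. intros H. unfold radius. destruct (Rlt_dec p 0) as [H'|H']; [|lra]. destruct completeness; auto. Qed.

Definition inside x := 0 < x /\ (p < 0 -> x < radius).

Lemma inside_hit_time y : 0 < y < peak -> inside (hit_time y).
Proof.
  intros Hy. split; [apply hit_time_pos; auto|]. intros Hp. destruct (radius_lub Hp) as [H1 _].
  assert (hit_time y < hit_time (y/2)) by (apply hit_time_decreasing; lra).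
  assert (hit_time (y/2) <= radius) by (apply H1; exists (y/2); split; auto; lra). lra.
Qed.

Lemma radius_pos : p < 0 -> 0 < radius.
Proof.
  intros Hp. assert (h0 := peak_pos).
  destruct (inside_hit_time (peak/2)) as [H1 H2]; [lra|]. specialize (H2 Hp). lra.
Qed.

Lemma radius_nz : radius <> 0.
Proof.
  destruct (Rlt_dec p 0) as [H|H]; [apply Rgt_not_eq, radius_pos; auto|].
  unfold radius. destruct (Rlt_dec p 0); [tauto|lra].
Qed.

Lemma inside_down x x' : 0 < x <= x' -> inside x' -> inside x.
Proof. intros H [H1 H2]. split; [lra|]. intros Hp; specialize (H2 Hp); lra. Qed.

Lemma inside_open x : inside x -> exists r, 0 < r /\ forall y, Rabs (y - x) < r -> inside y.
Proof.
  intros [H1 H2]. destruct (Rlt_dec p 0) as [Hp|Hp].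
  - specialize (H2 Hp). exists (Rmin x (radius - x)). split; [apply Rmin_glb_lt; lra|].
    intros y Hy. assert (Rmin x (radius - x) <= x) by apply Rmin_l.
    assert (Rmin x (radius - x) <= radius - x) by apply Rmin_r.
    apply Rabs_lt_between in Hy. split; [lra|]. intros; lra.
  - exists x. split; auto. intros y Hy. apply Rabs_lt_between in Hy. split; [lra|]. intros; lra.
Qed.

Lemma hit_time_onto x : inside x -> exists y, 0 < y < peak /\ hit_time y = x.
Proof.
  intros [Hx Hr].
  assert (Hhigh : exists ya, 0 < ya < peak /\ x < hit_time ya).
  { destruct (Rlt_or_le p 0) as [Hp|Hp]; [|apply hit_time_unbounded; auto].
    specialize (Hr Hp). destruct (radius_lub Hp) as [H1 H2].
    destruct (Classical_Prop.classic (exists ya, 0 < ya < peak /\ x < hit_time ya)) as [E|N]; auto.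
    assert (is_upper_bound hit_times x).
    { intros z [y [Hy ->]]. destruct (Rle_or_lt (hit_time y) x); auto. exfalso; apply N; exists y; auto. }
    specialize (H2 _ H). lra. }
  destruct Hhigh as [ya [Hya Ta]]. destruct (hit_time_small x Hx) as [yb [Hyb Tb]].
  assert (ya < yb).
  { destruct (Rtotal_order ya yb) as [H|[->|H]]; [auto|lra|].
    assert (hit_time ya < hit_time yb) by (apply hit_time_decreasing; lra). lra. }
  destruct (Ranalysis5.IVT_interv (fun y => x - hit_time y) ya yb) as [y [Hy Ey]]; [|auto|lra|lra|].
  - intros c Hc. apply continuity_pt_filterlim, continuous_minusR;
      [apply continuous_constR|apply continuous_hit_time; lra].
  - exists y. split; lra.
Qed.

(** * The profile *)

(* On [0, +oo): the inverse of [hit_time], equal to [peak] at [0] and to [0] beyond [radius]. *)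
Definition profile (x : R) : R :=
  match Rle_dec x 0 with
  | left _ => peak
  | right _ =>
      match excluded_middle_informative (inside x) with
      | left H => proj1_sig (constructive_indefinite_description _ (hit_time_onto x H))
      | right _ => 0
      end
  end.

Lemma profile_nonpos x : x <= 0 -> profile x = peak.
Proof. intros H. unfold profile. destruct (Rle_dec x 0); auto; lra. Qed.

Lemma profile_inside x : inside x -> 0 < profile x < peak /\ hit_time (profile x) = x.
Proof.
  intros H. unfold profile. destruct (Rle_dec x 0); [destruct H; lra|].
  destruct (excluded_middle_informative (inside x)); [|tauto].
  destruct constructive_indefinite_description as [y Hy]; simpl; auto.
Qed.

Lemma profile_outside x : 0 < x -> ~ inside x -> profile x = 0.
Proof.
  intros H1 H2. unfold profile. destruct (Rle_dec x 0); [lra|].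
  destruct (excluded_middle_informative (inside x)); tauto.
Qed.

Lemma profile_hit_time y : 0 < y < peak -> profile (hit_time y) = y.
Proof.
  intros Hy. destruct (profile_inside (hit_time y) (inside_hit_time y Hy)) as [H1 H2].
  apply hit_time_inj; auto.
Qed.

Lemma profile_range x : 0 <= profile x <= peak.
Proof.
  assert (h0 := peak_pos). destruct (Rle_or_lt x 0); [rewrite profile_nonpos; lra|].
  destruct (Classical_Prop.classic (inside x)) as [Hi|Hi].
  - destruct (profile_inside x Hi); lra.
  - rewrite profile_outside; auto; lra.
Qed.

Lemma profile_nonincreasing x x' : x <= x' -> profile x' <= profile x.
Proof.
  intros H. assert (h0 := peak_pos). destruct (Rle_or_lt x' 0); [rewrite !profile_nonpos; lra|].
  destruct (Rle_or_lt x 0); [rewrite (profile_nonpos x) by auto; apply profile_range|].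
  destruct (Classical_Prop.classic (inside x')) as [Hi|Hi];
    [|rewrite (profile_outside x'); auto; apply profile_range].
  destruct (profile_inside x (inside_down x x' ltac:(lra) Hi)) as [A1 A2].
  destruct (profile_inside x' Hi) as [B1 B2].
  destruct (Rle_or_lt (profile x') (profile x)); auto.
  assert (hit_time (profile x') < hit_time (profile x)) by (apply hit_time_decreasing; lra). lra.
Qed.

Lemma profile_darboux a0 b0 c :
  a0 < b0 -> profile b0 <= c <= profile a0 -> exists z, a0 <= z <= b0 /\ profile z = c.
Proof.
  intros Hab Hc. destruct (Req_dec c (profile a0)) as [->|Ha]; [exists a0; split; auto; lra|].
  destruct (Req_dec c (profile b0)) as [->|Hb]; [exists b0; split; auto; lra|].
  assert (Hr1 := profile_range a0). assert (Hr2 := profile_range b0).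
  assert (Hc' : 0 < c < peak) by lra. exists (hit_time c). rewrite profile_hit_time by auto.
  split; auto. split.
  - destruct (Rle_or_lt a0 (hit_time c)); auto.
    assert (profile a0 <= profile (hit_time c)) by (apply profile_nonincreasing; lra).
    rewrite profile_hit_time in * by auto. lra.
  - destruct (Rle_or_lt (hit_time c) b0); auto.
    assert (profile (hit_time c) <= profile b0) by (apply profile_nonincreasing; lra).
    rewrite profile_hit_time in * by auto. lra.
Qed.

Lemma continuous_profile x : continuous profile x.
Proof.
  apply continuous_nonincreasing_darboux; [apply profile_nonincreasing|apply profile_darboux].
Qed.

Lemma is_derive_profile x : inside x -> is_derive profile x (- slope (profile x)).
Proof.
  intros Hx. destruct (profile_inside x Hx) as [Hg Hgt].
  assert (hS : 0 < slope (profile x)) by (apply slope_pos; auto).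
  replace (- slope (profile x)) with (/ (- inv_slope (profile x))) by (unfold inv_slope; field; lra).
  apply is_derive_local_inverse with hit_time; [apply continuous_profile| |apply is_derive_hit_time; auto|].
  - destruct (inside_open x Hx) as [r [Hr H]]. exists r. split; auto.
    intros x' Hx'. apply profile_inside; auto.
  - assert (0 < inv_slope (profile x)) by (apply inv_slope_pos; auto). lra.
Qed.

Definition phi x := profile (Rabs x).

(* [sgn 0] is irrelevant: it only ever multiplies quantities that vanish at [phi 0 = peak]. *)
Definition sgn (x : R) : R := if Rlt_dec x 0 then -1 else 1.

Definition dphi x := - sgn x * slope (phi x).

Lemma continuous_phi x : continuous phi x.
Proof.
  apply (continuous_compR profile Rabs); [apply continuous_absR, continuous_idR|apply continuous_profile].
Qed.

Lemma phi_even x : phi (- x) = phi x.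
Proof. unfold phi. rewrite Rabs_Ropp. auto. Qed.

Lemma phi_range x : 0 <= phi x <= peak.
Proof. apply profile_range. Qed.

Lemma phi_0 : phi 0 = peak.
Proof. unfold phi. rewrite Rabs_R0. apply profile_nonpos; lra. Qed.

Lemma sgn_pos x : 0 < x -> sgn x = 1.
Proof. intros; unfold sgn; destruct (Rlt_dec x 0); lra. Qed.

Lemma sgn_neg x : x < 0 -> sgn x = -1.
Proof. intros; unfold sgn; destruct (Rlt_dec x 0); lra. Qed.

Lemma sgn_sq x : sgn x * sgn x = 1.
Proof. unfold sgn. destruct (Rlt_dec x 0); ring. Qed.

Lemma Rabs_sgn x : Rabs (sgn x) = 1.
Proof. unfold sgn. destruct (Rlt_dec x 0); [rewrite Rabs_left|rewrite Rabs_pos_eq]; lra. Qed.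

Lemma sgn_locally x : x <> 0 -> exists r, 0 < r /\ forall y, Rabs (y - x) < r -> sgn y = sgn x.
Proof.
  intros Hx. exists (Rabs x). split; [apply Rabs_pos_lt; auto|]. intros y Hy.
  destruct (Rlt_or_le 0 x).
  - rewrite (Rabs_pos_eq x) in Hy by lra. apply Rabs_lt_between in Hy. rewrite !sgn_pos; lra.
  - rewrite (Rabs_left x) in Hy by lra. apply Rabs_lt_between in Hy. rewrite !sgn_neg; lra.
Qed.

Lemma is_derive_sgn_mul (K : R -> R) x dK :
  x <> 0 -> is_derive K x dK -> is_derive (fun y => sgn y * K y) x (sgn x * dK).
Proof.
  intros Hx HK. destruct (sgn_locally x Hx) as [r [Hr H]].
  apply is_derive_ext_loc with (f := fun y => sgn x * K y); [|apply is_derive_scalR; auto].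
  apply (locally_of_ball x r); auto. intros y Hy. rewrite (H y Hy); auto.
Qed.

Lemma continuous_sgn_profile (H : R -> R) :
  (forall s, continuous H s) -> H peak = 0 -> forall x, continuous (fun x => sgn x * H (phi x)) x.
Proof.
  intros Hc H0 x. destruct (Req_dec x 0) as [->|E].
  - apply continuous_eps_delta. intros eps He.
    destruct (proj1 (continuous_eps_delta _ 0) (continuous_compR H phi 0 (continuous_phi 0) (Hc _)) eps He)
      as [d [Hd Hy]].
    exists d. split; auto. intros y Hyd. specialize (Hy y Hyd). rewrite phi_0, H0 in *.
    rewrite Rmult_0_r, Rminus_0_r in *. rewrite Rabs_mult, Rabs_sgn. lra.
  - destruct (sgn_locally x E) as [r [Hr Hs]].
    apply continuous_ext_loc with (g := fun y => sgn x * H (phi y)).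
    + apply (locally_of_ball x r); auto. intros y Hy. rewrite (Hs y Hy); auto.
    + apply continuous_scalR, continuous_compR; [apply continuous_phi|apply Hc].
Qed.

Lemma sgn_profile_bounded (H : R -> R) :
  (forall s, continuous H s) -> exists M, forall x, Rabs (sgn x * H (phi x)) <= M.
Proof.
  intros Hc. destruct (continuous_comp_bounded H phi peak Hc phi_range) as [M HM].
  exists M. intros x. rewrite Rabs_mult, Rabs_sgn, Rmult_1_l. auto.
Qed.

Lemma phi_zero_beyond_radius x :
  p < 0 -> radius < Rabs x -> exists r, 0 < r /\ forall y, Rabs (y - x) < r -> phi y = 0.
Proof.
  intros Hp Hx. assert (hL := radius_pos Hp).
  exists (Rabs x - radius). split; [lra|]. intros y Hy.
  assert (Rabs x <= Rabs y + Rabs (y - x)).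
  { replace x with (y - (y - x)) at 1 by ring. eapply Rle_trans; [apply Rabs_triang|].
    rewrite Rabs_Ropp. lra. }
  unfold phi. apply profile_outside; [lra|]. intros [_ Hin]. specialize (Hin Hp). lra.
Qed.

(* Off the three exceptional points [0] and [+-radius], either [|x|] is inside the
   support or [phi] vanishes near [x]. *)
Lemma is_derive_glue (f f' : R -> R) :
  (forall x, continuous f x) -> (forall x, continuous f' x) ->
  (forall x, phi x = 0 -> f x = 0 /\ f' x = 0) ->
  (forall x, x <> 0 -> inside (Rabs x) -> is_derive f x (f' x)) ->
  forall x, is_derive f x (f' x).
Proof.
  intros Hf Hf' Hzero Hin. apply (is_derive_off_levels f f' radius radius_nz Hf Hf').
  intros y Hy0 HyL. destruct (Classical_Prop.classic (inside (Rabs y))) as [Hi|Hi]; [apply Hin; auto|].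
  assert (0 < Rabs y) by (apply Rabs_pos_lt; auto).
  destruct (Rlt_dec p 0) as [Hp|Hp]; [|exfalso; apply Hi; split; auto; intros; lra].
  destruct (Rlt_or_le radius (Rabs y)) as [Hr|Hr]; [|exfalso; apply Hi; split; auto; intros; lra].
  destruct (phi_zero_beyond_radius y Hp Hr) as [r [Hr0 Hz]].
  replace (f' y) with 0 by (symmetry; apply Hzero, Hz; rewrite Rminus_diag, Rabs_R0; auto).
  apply is_derive_locally_const with 0. exists r. split; auto. intros z Hz'. apply Hzero, Hz; auto.
Qed.

Lemma phi_inside x : x <> 0 -> inside (Rabs x) -> 0 < phi x < peak.
Proof. intros H1 H2. apply profile_inside; auto. Qed.

Lemma continuous_dphi x : continuous dphi x.
Proof.
  apply continuous_extR with (f := fun x => sgn x * (- slope (phi x))); [intros; unfold dphi; ring|].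
  apply (continuous_sgn_profile (fun s => - slope s)); [|rewrite slope_peak; ring].
  intros s. apply continuous_extR with (f := fun s => -1 * slope s); [intros; ring|].
  apply continuous_scalR, continuous_slope.
Qed.

Lemma is_derive_phi x : is_derive phi x (dphi x).
Proof.
  apply is_derive_glue; [apply continuous_phi|apply continuous_dphi| |].
  { intros y Hy. unfold dphi. rewrite Hy, slope_0. split; auto; ring. }
  intros y Hy Hin. unfold dphi. destruct (Rlt_or_le 0 y) as [Hp|Hn].
  - rewrite sgn_pos by auto. rewrite Rabs_pos_eq in Hin by lra.
    apply is_derive_ext_loc with (f := profile).
    + apply (locally_of_ball y y); auto. intros z Hz. apply Rabs_lt_between in Hz.
      unfold phi. rewrite Rabs_pos_eq by lra. auto.
    + unfold phi. rewrite Rabs_pos_eq by lra.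
      apply is_derive_val with (- slope (profile y)); [ring|apply is_derive_profile; auto].
  - rewrite sgn_neg by lra. rewrite Rabs_left in Hin by lra.
    apply is_derive_ext_loc with (f := fun z => profile (- z)).
    + apply (locally_of_ball y (- y)); [lra|]. intros z Hz. apply Rabs_lt_between in Hz.
      unfold phi. rewrite Rabs_left by lra. auto.
    + unfold phi. rewrite Rabs_left by lra.
      apply is_derive_val with ((-1) * (- slope (profile (- y)))); [ring|].
      apply (is_derive_compR profile (fun z => - z)); [apply is_derive_profile; auto|auto_derive; auto].
Qed.

Lemma continuous_force_phi x : continuous (fun x => force (phi x)) x.
Proof. apply continuous_compR; [apply continuous_phi|apply continuous_force]. Qed.

Lemma is_derive_dphi x : is_derive dphi x (force (phi x)).
Proof.
  apply (is_derive_glue dphi (fun x => force (phi x))); [apply continuous_dphi|apply continuous_force_phi| |].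
  { intros y Hy. unfold dphi. rewrite Hy, slope_0, force_0. split; auto; ring. }
  intros y Hy Hin. destruct (phi_inside y Hy Hin) as [Ha Hb].
  assert (hS : 0 < slope (phi y)) by (apply slope_pos; auto).
  apply is_derive_extR with (f := fun y => sgn y * (- slope (phi y))); [intros; unfold dphi; ring|].
  apply is_derive_val with (sgn y * (- (dphi y * (force (phi y) / slope (phi y))))).
  - unfold dphi. replace (sgn y * - (- sgn y * slope (phi y) * (force (phi y) / slope (phi y))))
      with ((sgn y * sgn y) * force (phi y)) by (field; lra).
    rewrite sgn_sq; ring.
  - apply is_derive_sgn_mul; auto.
    apply is_derive_extR with (f := fun y => -1 * slope (phi y)); [intros; ring|].
    apply is_derive_val with (-1 * (dphi y * (force (phi y) / slope (phi y)))); [ring|].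
    apply is_derive_scalR, (is_derive_compR slope phi); [apply is_derive_slope; auto|apply is_derive_phi].
Qed.

(** * Higher derivatives and regularity *)

Lemma pot_weighted e s :
  apow s e * pot s
  = w / 2 * apow s (e + 2) + a / (p + 2) * apow s (e + p + 2) - 3 * b / 8 * apow s (e + 8/3).
Proof.
  unfold pot. rewrite <- apow_2.
  replace (e + p + 2) with (e + (p + 2)) by ring.
  rewrite <- !apow_add. field. lra.
Qed.

Lemma apow_mul_slope e s : apow s (e / 2) * slope s = sqrt (2 * (apow s e * pot s)).
Proof.
  unfold slope. rewrite (apow_sqrt s), <- sqrt_mult_alt by apply apow_ge0.
  f_equal. replace (2 * (e / 2)) with e by field. ring.
Qed.

Lemma continuous_pot_weighted e s :
  0 < e + 2 -> 0 < e + p + 2 -> continuous (fun s => apow s e * pot s) s.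
Proof.
  intros H1 H2. apply continuous_extR with (f := fun s =>
    w / 2 * apow s (e + 2) + a / (p + 2) * apow s (e + p + 2) - 3 * b / 8 * apow s (e + 8/3)).
  { intros; rewrite pot_weighted; reflexivity. }
  apply continuous_minusR; [apply continuous_plusR|]; apply continuous_scalR, continuous_apow; lra.
Qed.

Lemma is_derive_pot_weighted e s : 0 < s ->
  is_derive (fun s => apow s e * pot s) s
    (w / 2 * ((e + 2) * apow s (e + 1)) + a / (p + 2) * ((e + p + 2) * apow s (e + p + 1))
     - 3 * b / 8 * ((e + 8/3) * apow s (e + 5/3))).
Proof.
  intros Hs. apply is_derive_extR with (f := fun s =>
    w / 2 * apow s (e + 2) + a / (p + 2) * apow s (e + p + 2) - 3 * b / 8 * apow s (e + 8/3)).
  { intros; rewrite pot_weighted; reflexivity. }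
  apply is_derive_minusR; [apply is_derive_plusR|]; apply is_derive_scalR;
    [replace (e + 1) with (e + 2 - 1) by ring|replace (e + p + 1) with (e + p + 2 - 1) by ring
    |replace (e + 5/3) with (e + 8/3 - 1) by field]; apply is_derive_apow; auto.
Qed.

Definition psi x := - b * apow (phi x) (2/3).

Definition dpsi_of s := 2/3 * b * sqrt (2 * (apow s (- (2/3)) * pot s)).
Definition dpsi x := sgn x * dpsi_of (phi x).

Lemma continuous_dpsi_of s : continuous dpsi_of s.
Proof.
  apply continuous_scalR, continuous_sqrtR, continuous_scalR, continuous_pot_weighted; lra.
Qed.

Lemma dpsi_of_0 : dpsi_of 0 = 0.
Proof. unfold dpsi_of. rewrite pot_0, !Rmult_0_r, sqrt_0. ring. Qed.

Lemma dpsi_of_peak : dpsi_of peak = 0.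
Proof. unfold dpsi_of. rewrite pot_peak, !Rmult_0_r, sqrt_0. ring. Qed.

Lemma continuous_psi x : continuous psi x.
Proof.
  apply continuous_scalR, (continuous_compR (fun s => apow s (2/3)) phi);
    [apply continuous_phi|apply continuous_apow; lra].
Qed.

Lemma continuous_dpsi x : continuous dpsi x.
Proof. apply (continuous_sgn_profile dpsi_of); [apply continuous_dpsi_of|apply dpsi_of_peak]. Qed.

Lemma is_derive_psi x : is_derive psi x (dpsi x).
Proof.
  apply is_derive_glue; [apply continuous_psi|apply continuous_dpsi| |].
  { intros y Hy. unfold psi, dpsi. rewrite Hy, apow_0l, dpsi_of_0. split; ring. }
  intros y Hy Hin. destruct (phi_inside y Hy Hin) as [Ha Hb].
  unfold dpsi, dpsi_of. rewrite <- apow_mul_slope.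
  apply is_derive_val with (- b * (dphi y * (2/3 * apow (phi y) (2/3 - 1)))).
  - unfold dphi. replace (- (2/3) / 2) with (2/3 - 1) by field. ring.
  - apply is_derive_scalR, (is_derive_compR (fun s => apow s (2/3)) phi);
      [apply is_derive_apow; auto|apply is_derive_phi].
Qed.

Definition d2psi_of s :=
  2/3 * b * (2/3 * w * apow s (2/3) + a * (p + 4/3) / (p + 2) * apow s (p + 2/3) - 3 * b / 4 * apow s (4/3)).
Definition d2psi x := - d2psi_of (phi x).

Lemma continuous_d2psi_of : - (2/3) < p -> forall s, continuous d2psi_of s.
Proof.
  intros hq s. unfold d2psi_of.
  apply continuous_scalR, continuous_minusR; [apply continuous_plusR|];
    apply continuous_scalR, continuous_apow; lra.
Qed.

Lemma continuous_d2psi : - (2/3) < p -> forall x, continuous d2psi x.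
Proof.
  intros hq x. apply continuous_extR with (f := fun x => -1 * d2psi_of (phi x)); [intros; unfold d2psi; ring|].
  apply continuous_scalR, continuous_compR; [apply continuous_phi|apply continuous_d2psi_of; auto].
Qed.

(* [phi^(1/3)] cancels against [sqrt (2 phi^(-2/3) pot)] in the chain rule. *)
Lemma is_derive_dpsi_of s : 0 < s < peak -> is_derive dpsi_of s (d2psi_of s / slope s).
Proof.
  intros Hs. assert (hS : 0 < slope s) by (apply slope_pos; auto).
  assert (hX : 0 < apow s (1/3)) by (apply apow_gt0; lra).
  assert (hQ : 0 < apow s (- (2/3)) * pot s).
  { apply Rmult_lt_0_compat; [apply apow_gt0; lra|apply pot_pos_below_peak; lra]. }
  unfold dpsi_of. eapply is_derive_val;
    [|apply is_derive_scalR, (is_derive_sqrtR (fun s => 2 * (apow s (- (2/3)) * pot s)));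
      [apply is_derive_scalR, is_derive_pot_weighted|]; lra].
  rewrite <- apow_mul_slope. unfold d2psi_of.
  set (X := apow s (1/3)) in *.
  assert (Hpow : forall e, apow s (e + 1/3) = apow s e * X) by (intros; unfold X; apply eq_sym, apow_add).
  replace (- (2/3) / 2) with (- (1/3)) by field. rewrite apow_opp by lra. fold X.
  assert (HX2 : apow s (2/3) = X * X) by (unfold X; rewrite apow_add; f_equal; field).
  replace (- (2/3) + 1) with (1/3) by field. replace (- (2/3) + p + 1) with (p + 1/3) by field.
  replace (- (2/3) + 5/3) with 1 by field.
  replace (p + 2/3) with (p + 1/3 + 1/3) by field. replace (4/3) with (1 + 1/3) by field.
  rewrite !Hpow, HX2. fold X. field. lra.
Qed.

Lemma is_derive_dpsi : - (2/3) < p -> forall x, is_derive dpsi x (d2psi x).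
Proof.
  intros hq. apply is_derive_glue; [apply continuous_dpsi|apply continuous_d2psi; auto| |].
  { intros y Hy. unfold dpsi, d2psi, d2psi_of. rewrite Hy, dpsi_of_0, !apow_0l. split; ring. }
  intros y Hy Hin. assert (Hs := phi_inside y Hy Hin).
  assert (hS : 0 < slope (phi y)) by (apply slope_pos; auto).
  apply is_derive_val with (sgn y * (dphi y * (d2psi_of (phi y) / slope (phi y)))).
  - unfold d2psi, dphi. replace (sgn y * (- sgn y * slope (phi y) * (d2psi_of (phi y) / slope (phi y))))
      with (- (sgn y * sgn y) * d2psi_of (phi y)) by (field; lra).
    rewrite sgn_sq. ring.
  - apply is_derive_sgn_mul; auto.
    apply (is_derive_compR dpsi_of phi); [apply is_derive_dpsi_of; auto|apply is_derive_phi].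
Qed.

Definition dforce s := w + a * ((p + 1) * apow s p) - b * (5/3 * apow s (2/3)).

Lemma is_derive_force s : 0 < s -> is_derive force s (dforce s).
Proof.
  intros Hs. unfold force, dforce. apply is_derive_minusR; [apply is_derive_plusR|].
  - auto_derive; auto. ring.
  - apply is_derive_scalR. replace p with (p + 1 - 1) at 2 by ring. apply is_derive_apow; auto.
  - apply is_derive_scalR. replace (2/3) with (5/3 - 1) by field. apply is_derive_apow; auto.
Qed.

Definition d3phi_of s :=
  (w - 5/3 * b * apow s (2/3)) * slope s + a * (p + 1) * sqrt (2 * (apow s (2 * p) * pot s)).
Definition d3phi x := - sgn x * d3phi_of (phi x).

Lemma dforce_mul_slope s : dforce s * slope s = d3phi_of s.
Proof.
  unfold dforce, d3phi_of. rewrite <- apow_mul_slope. replace (2 * p / 2) with p by field. ring.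
Qed.

Lemma continuous_d3phi_of : - (2/3) < p -> forall s, continuous d3phi_of s.
Proof.
  intros hq s. apply continuous_plusR.
  - apply continuous_multR; [|apply continuous_slope].
    apply continuous_minusR; [apply continuous_constR|apply continuous_scalR, continuous_apow; lra].
  - apply continuous_scalR, continuous_sqrtR, continuous_scalR, continuous_pot_weighted; lra.
Qed.

Lemma d3phi_of_0 : d3phi_of 0 = 0.
Proof. unfold d3phi_of. rewrite slope_0, pot_0, !Rmult_0_r, sqrt_0. ring. Qed.

Lemma d3phi_of_peak : d3phi_of peak = 0.
Proof. unfold d3phi_of. rewrite slope_peak, pot_peak, !Rmult_0_r, sqrt_0. ring. Qed.

Lemma continuous_d3phi : - (2/3) < p -> forall x, continuous d3phi x.
Proof.
  intros hq x. apply (continuous_extR (fun x => sgn x * (- d3phi_of (phi x)))); [intros; unfold d3phi; ring|].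
  apply (continuous_sgn_profile (fun s => - d3phi_of s)); [|rewrite d3phi_of_peak; ring].
  intros s. apply continuous_extR with (f := fun s => -1 * d3phi_of s); [intros; ring|].
  apply continuous_scalR, continuous_d3phi_of; auto.
Qed.

Lemma is_derive_force_phi : - (2/3) < p -> forall x, is_derive (fun x => force (phi x)) x (d3phi x).
Proof.
  intros hq. apply is_derive_glue; [apply continuous_force_phi|apply continuous_d3phi; auto| |].
  { intros y Hy. unfold d3phi. rewrite Hy, force_0, d3phi_of_0. split; auto; ring. }
  intros y Hy Hin. destruct (phi_inside y Hy Hin) as [Ha Hb].
  apply is_derive_val with (dphi y * dforce (phi y)).
  - unfold d3phi, dphi. rewrite <- dforce_mul_slope. ring.
  - apply (is_derive_compR force phi); [apply is_derive_force; auto|apply is_derive_phi].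
Qed.

Lemma dphi_bounded : exists M, forall x, Rabs (dphi x) <= M.
Proof.
  destruct (sgn_profile_bounded (fun s => - slope s)) as [M HM].
  - intros s. apply continuous_extR with (f := fun s => -1 * slope s); [intros; ring|].
    apply continuous_scalR, continuous_slope.
  - exists M. intros x. unfold dphi. replace (- sgn x * slope (phi x)) with (sgn x * - slope (phi x)) by ring.
    auto.
Qed.

Lemma d3phi_bounded : - (2/3) < p -> exists M, forall x, Rabs (d3phi x) <= M.
Proof.
  intros hq. destruct (sgn_profile_bounded (fun s => - d3phi_of s)) as [M HM].
  - intros s. apply continuous_extR with (f := fun s => -1 * d3phi_of s); [intros; ring|].
    apply continuous_scalR, continuous_d3phi_of; auto.
  - exists M. intros x. unfold d3phi.
    replace (- sgn x * d3phi_of (phi x)) with (sgn x * - d3phi_of (phi x)) by ring. auto.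
Qed.

Definition phi_derivs (j : nat) : R -> R :=
  match j with
  | 0 => phi
  | 1 => dphi
  | 2 => fun x => force (phi x)
  | _ => d3phi
  end.

Definition psi_derivs (j : nat) : R -> R :=
  match j with
  | 0 => psi
  | 1 => dpsi
  | _ => d2psi
  end.

Lemma phi_bounded : exists M, forall x, Rabs (phi x) <= M.
Proof. exists peak. intros x. destruct (phi_range x). rewrite Rabs_pos_eq; lra. Qed.

Lemma phi_C2 : CkWkinf 2 phi.
Proof.
  apply (CkWkinf_of_derivatives 2 phi_derivs).
  - intros [|[|j]] x Hj; [apply is_derive_phi|apply is_derive_dphi|lia].
  - intros [|[|[|j]]] x Hj; [apply continuous_phi|apply continuous_dphi|apply continuous_force_phi|lia].
  - intros [|[|[|j]]] Hj; [apply phi_bounded|apply dphi_bounded| |lia].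
    apply (continuous_comp_bounded force phi peak continuous_force phi_range).
Qed.

Lemma phi_C3 : - (2/3) < p -> CkWkinf 3 phi.
Proof.
  intros hq. apply (CkWkinf_of_derivatives 3 phi_derivs).
  - intros [|[|[|j]]] x Hj; [apply is_derive_phi|apply is_derive_dphi|apply is_derive_force_phi; auto|lia].
  - intros [|[|[|[|j]]]] x Hj;
      [apply continuous_phi|apply continuous_dphi|apply continuous_force_phi|apply continuous_d3phi; auto|lia].
  - intros [|[|[|[|j]]]] Hj; [apply phi_bounded|apply dphi_bounded| |apply d3phi_bounded; auto|lia].
    apply (continuous_comp_bounded force phi peak continuous_force phi_range).
Qed.

Lemma psi_bounded : exists M, forall x, Rabs (psi x) <= M.
Proof.
  apply (continuous_comp_bounded (fun s => - b * apow s (2/3)) phi peak); [|apply phi_range].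
  intros s. apply continuous_scalR, continuous_apow; lra.
Qed.

Lemma dpsi_bounded : exists M, forall x, Rabs (dpsi x) <= M.
Proof. apply sgn_profile_bounded, continuous_dpsi_of. Qed.

Lemma psi_C1 : CkWkinf 1 psi.
Proof.
  apply (CkWkinf_of_derivatives 1 psi_derivs).
  - intros [|j] x Hj; [apply is_derive_psi|lia].
  - intros [|[|j]] x Hj; [apply continuous_psi|apply continuous_dpsi|lia].
  - intros [|[|j]] Hj; [apply psi_bounded|apply dpsi_bounded|lia].
Qed.

Lemma psi_C2 : - (2/3) < p -> CkWkinf 2 psi.
Proof.
  intros hq. apply (CkWkinf_of_derivatives 2 psi_derivs).
  - intros [|[|j]] x Hj; [apply is_derive_psi|apply is_derive_dpsi; auto|lia].
  - intros [|[|[|j]]] x Hj; [apply continuous_psi|apply continuous_dpsi|apply continuous_d2psi; auto|lia].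
  - intros [|[|[|j]]] Hj; [apply psi_bounded|apply dpsi_bounded| |lia].
    apply (continuous_comp_bounded (fun s => - d2psi_of s) phi peak); [|apply phi_range].
    intros s. apply continuous_extR with (f := fun s => -1 * d2psi_of s); [intros; ring|].
    apply continuous_scalR, continuous_d2psi_of; auto.
Qed.

Lemma phi_radially_decreasing : radially_decreasing phi.
Proof.
  split; [apply phi_even|]. intros x y Hx Hxy. unfold phi. apply profile_nonincreasing.
  rewrite !Rabs_pos_eq; lra.
Qed.

Lemma mpsi_radially_decreasing : radially_decreasing (fun x => - psi x).
Proof.
  unfold psi. split; [intros x; rewrite phi_even; auto|].
  intros x y Hx Hxy. assert (phi y <= phi x) by (apply phi_radially_decreasing; auto).
  assert (apow (phi y) (2/3) <= apow (phi x) (2/3)) by (apply apow_le; [lra|split; [apply phi_range|auto]]).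
  nra.
Qed.

Lemma mpsi_nonneg x : 0 <= - psi x.
Proof. unfold psi. assert (0 <= apow (phi x) (2/3)) by apply apow_ge0. nra. Qed.

Lemma phi_nontrivial : exists x, phi x <> 0.
Proof. exists 0. rewrite phi_0. assert (h := peak_pos). lra. Qed.

Lemma phi_compact_support : p < 0 -> compactly_supported phi.
Proof.
  intros Hp. exists radius. intros x Hx. unfold phi. apply profile_outside; [assert (h := radius_pos Hp); lra|].
  intros [_ H]. specialize (H Hp). lra.
Qed.

Lemma psi_compact_support : p < 0 -> compactly_supported psi.
Proof.
  intros Hp. destruct (phi_compact_support Hp) as [M HM]. exists M. intros x Hx.
  unfold psi. rewrite HM, apow_0l by auto. ring.
Qed.

(** * The standing wave *)

Variable gamma : R.
Hypothesis hgamma : 0 < gamma.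
Hypothesis hb_gamma : b = Rpower gamma (- (1/3)).

Lemma b_cube : b ^ 3 = / gamma.
Proof.
  rewrite hb_gamma. simpl. rewrite Rmult_1_r, <- !Rpower_plus.
  replace (- (1/3) + (- (1/3) + - (1/3))) with (Ropp 1) by field. rewrite Rpower_Ropp, Rpower_1; auto.
Qed.

Lemma mpsi_rpow x : - psi x = rpow (phi x ^ 2 / gamma) (1/3).
Proof.
  assert (h := phi_range x). unfold psi.
  rewrite rpow_apow by (apply Rmult_le_pos; [apply pow2_ge_0|apply Rlt_le, Rinv_0_lt_compat; auto]).
  change (phi x ^ 2 / gamma) with (phi x ^ 2 * / gamma).
  rewrite <- apow_2, apow_mult, apow_apow, (apow_pos (/ gamma)) by (apply Rinv_0_lt_compat; auto).
  replace (2 * (1/3)) with (2/3) by field.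
  replace (Rpower (/ gamma) (1/3)) with b; [ring|].
  rewrite hb_gamma. unfold Rpower. rewrite ln_Rinv by auto. f_equal. ring.
Qed.

Lemma Cmod_standing (th c : R) : Cmod (Cmult ((cos th, sin th) : C) (RtoC c)) = Rabs c.
Proof.
  rewrite Cmod_mult, Cmod_R. replace (Cmod ((cos th, sin th) : C)) with 1; [ring|].
  unfold Cmod. cbn [fst snd]. assert (E := sin2_cos2 th). unfold Rsqr in E.
  replace (cos th ^ 2 + sin th ^ 2) with 1 by (rewrite <- E; ring). rewrite sqrt_1; auto.
Qed.

Lemma is_derive_phi_sq x : is_derive (fun y => phi y ^ 2) x (2 * phi x * dphi x).
Proof.
  apply is_derive_extR with (f := fun y => phi y * phi y); [intros; ring|].
  apply is_derive_val with (dphi x * phi x + phi x * dphi x); [ring|].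
  apply is_derive_multR; apply is_derive_phi.
Qed.

Lemma force_apow s : 0 <= s ->
  force s = w * s + a * (apow s p * s) - b * (apow s (2/3) * s).
Proof.
  intros Hs.
  replace (apow s p * s) with (apow s (p + 1)) by (rewrite <- apow_add, apow_1, Rabs_pos_eq; auto).
  replace (apow s (2/3) * s) with (apow s (5/3))
    by (replace (5/3) with (2/3 + 1) by field; rewrite <- apow_add, apow_1, Rabs_pos_eq; auto).
  reflexivity.
Qed.

(* With [u = e^(iwt) phi], [i u_t + u_xx = e^(iwt) (phi'' - w phi)] and [phi'' = force phi]. *)
Lemma standing_wave_schrodinger : forall x t, exists (ut uxx : C) (ux : R -> C),
  is_derive (fun s => Cmult ((cos (w * s), sin (w * s)) : C) (RtoC (phi x))) t ut /\
  (forall y, is_derive (fun y' => Cmult ((cos (w * t), sin (w * t)) : C) (RtoC (phi y'))) y (ux y)) /\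
  is_derive ux x uxx /\
  Cplus (Cmult Ci ut) uxx =
    Cplus (Cmult (RtoC a) (nonlin p (Cmult ((cos (w * t), sin (w * t)) : C) (RtoC (phi x)))))
          (Cmult (Cmult ((cos (w * t), sin (w * t)) : C) (RtoC (phi x))) (RtoC (psi x))).
Proof.
  intros x t. set (c := cos (w * t)). set (s := sin (w * t)).
  exists ((- (w * s) * phi x, w * c * phi x) : C), ((c * force (phi x), s * force (phi x)) : C),
    (fun y => ((c * dphi y, s * dphi y) : C)).
  split; [|split; [|split]].
  - apply is_derive_pair with (f := fun r => cos (w * r) * phi x) (g := fun r => sin (w * r) * phi x).
    + intros r. unfold Cmult, RtoC. simpl. f_equal; ring.
    + auto_derive; auto. unfold s; ring.
    + auto_derive; auto. unfold c; ring.
  - intros y. apply is_derive_pair with (f := fun r => c * phi r) (g := fun r => s * phi r).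
    + intros r. unfold Cmult, RtoC. simpl. f_equal; ring.
    + apply is_derive_scalR, is_derive_phi.
    + apply is_derive_scalR, is_derive_phi.
  - apply is_derive_pair with (f := fun r => c * dphi r) (g := fun r => s * dphi r); [reflexivity| |];
      apply is_derive_scalR, is_derive_dphi.
  - assert (h := phi_range x). unfold nonlin, c, s. rewrite Cmod_standing, Rabs_pos_eq, rpow_apow by lra.
    rewrite force_apow by lra. unfold psi, Cplus, Cmult, Ci, RtoC. simpl. f_equal; ring.
Qed.

(* [f(psi) = - gamma psi^3 = gamma b^3 phi^2 = phi^2]: the law reads [0 + (phi^2)' = (phi^2)']. *)
Lemma standing_wave_conservation : forall x t, exists vt fx gx : R,
  is_derive (fun s => psi x) t vt /\
  is_derive (fun y => flux gamma (psi y)) x fx /\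
  is_derive (fun y => Cmod (Cmult ((cos (w * t), sin (w * t)) : C) (RtoC (phi y))) ^ 2) x gx /\
  vt + fx = gx.
Proof.
  intros x t. exists 0, (2 * phi x * dphi x), (2 * phi x * dphi x).
  split; [apply is_derive_constR|split; [|split; [|ring]]];
    apply is_derive_extR with (f := fun y => phi y ^ 2); try apply is_derive_phi_sq; intros y.
  - unfold flux, psi.
    replace ((- b * apow (phi y) (2/3)) ^ 3)
      with (- (b ^ 3) * (apow (phi y) (2/3) * (apow (phi y) (2/3) * apow (phi y) (2/3)))) by ring.
    rewrite !apow_add. replace (2/3 + (2/3 + 2/3)) with 2 by field. rewrite apow_2, b_cube. field. lra.
  - rewrite Cmod_standing, Rabs_pos_eq; [auto|apply phi_range].
Qed.

End Profile.

Theorem proposition6 (p gamma a w : R) :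
  -1 < p <= 2/3 -> 0 < gamma -> 0 < a -> 0 < w ->
  (p = 2/3 -> Rpower gamma (-(1/3)) > a) ->
  exists phi psi : R -> R,
    (exists x, phi x <> 0) /\
    is_solution p a gamma
      (fun x t => Cmult ((cos (w * t), sin (w * t)) : C) (RtoC (phi x)))
      (fun x t => psi x) /\
    (forall x, 0 <= phi x) /\ radially_decreasing phi /\
    (forall x, - psi x = rpow (phi x ^ 2 / gamma) (1/3)) /\
    (forall x, 0 <= - psi x) /\ radially_decreasing (fun x => - psi x) /\
    CkWkinf 2 phi /\ CkWkinf 1 (fun x => - psi x) /\
    (-(2/3) < p -> CkWkinf 3 phi /\ CkWkinf 2 psi) /\
    (p < 0 -> compactly_supported phi /\ compactly_supported psi).
Proof.
  intros Hp Hg Ha Hw Hcrit.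
  set (b := Rpower gamma (- (1/3))).
  assert (Hb : 0 < b) by apply exp_pos.
  assert (Hab : p = 2/3 -> a < b) by exact Hcrit.
  exists (phi p a b w Hp Ha Hb Hw Hab), (psi p a b w Hp Ha Hb Hw Hab).
  split; [apply phi_nontrivial|]. split; [split; intros x t;
    [apply standing_wave_schrodinger|apply standing_wave_conservation with (b := b); auto]|].
  split; [intros x; apply phi_range|]. split; [apply phi_radially_decreasing|].
  split; [intros x; apply mpsi_rpow; auto|]. split; [apply mpsi_nonneg|].
  split; [apply mpsi_radially_decreasing|]. split; [apply phi_C2|].
  split; [apply CkWkinf_opp, psi_C1|].
  split; [intros Hq; split; [apply phi_C3|apply psi_C2]; auto|].
  intros Hneg; split; [apply phi_compact_support|apply psi_compact_support]; auto.
Qed.
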